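(* Let $g\in C^0([0,\infty),H)$ and let $u$ be the weak solution on $[0,\infty)$ of $u''+2\delta u'+Au=g$ with data in $D(A^{1/2})\times H$. Define $$E(t)=|u'(t)|^2+|A^{1/2}u(t)|^2,\qquad \widehat E(t)=E(t)+2\mu\langle u'(t),Qu(t)\rangle,$$ and, for $d\ge0$ and $u(t)\ne0$, $$G_d(t)=\frac{E(t)}{|u(t)|^{2+d}},\qquad \widehat G_d(t)=\frac{\widehat E(t)}{|u(t)|^{2+d}}.$$ Then: (1) $\tfrac12E(t)\le\widehat E(t)\le 2E(t)$ for all $t\ge0$. Moreover, $\widehat E$ is of class $C^1$ on $[0,\infty)$ and $$\widehat E'(t)\le-\frac{\mu}{2}\widehat E(t)+\frac{2}{\delta}|g(t)|^2\quad\text{for all } t\ge0.$$ (2) Suppose $u(t)\ne0$ for all $t$ in an interval $(a,b)$, and let $d\ge0$. Then $\tfrac12G_d(t)\le\widehat G_d(t)\le2G_d(t)$ on $(a,b)$. Moreover, $\widehat G_d$ is of class $C^1$ on $(a,b)$ and $$\widehat G_d'(t)\le-\frac{\mu}{2}\widehat G_d(t)+\frac{2}{\delta}\frac{|g(t)|^2}{|u(t)|^{2+d}}+(2+d)|u(t)|^{d/2}[G_d(t)]^{1/2}\widehat G_d(t)\quad\text{for all } t\in(a,b).$$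
   Context: $H$ is a separable real Hilbert space with norm $|\cdot|$ and scalar product $\langle\cdot,\cdot\rangle$. $A$ is a self-adjoint nonnegative operator with dense domain, and $\delta>0$. Weak solutions of $u''+2\delta u'+Au=g$ lie in $C^0([0,\infty),D(A^{1/2}))\cap C^1([0,\infty),H)$. Their energy $E$ is $C^1$ with $E'=-4\delta|u'|^2+2\langle u',g\rangle$. $Q:H\to H$ denotes the orthogonal projection onto $\ker(A)^\perp$. The constant $\nu>0$ is such that $|Qu|^2\le\nu^{-1}|A^{1/2}u|^2$ for all $u\in D(A^{1/2})$. Under the spectral assumption that $\sigma(A)$ is a discrete set of eigenvalues without finite accumulation points, one can take $\nu$ to be the smallest positive eigenvalue of $A$, or any $\nu>0$ if $A=0$. The constant $\mu$ is $\mu:=\min\{\tfrac12,\tfrac{\nu}{2},\tfrac{\delta}{2},\tfrac{\nu}{5\delta}\}$. *)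

From Stdlib Require Import Reals.
Open Scope R_scope.

Record Hilbert := {
  hcar :> Type;
  h0 : hcar;
  hadd : hcar -> hcar -> hcar;
  hopp : hcar -> hcar;
  hscal : R -> hcar -> hcar;
  hinner : hcar -> hcar -> R;
  haddA : forall x y z, hadd x (hadd y z) = hadd (hadd x y) z;
  haddC : forall x y, hadd x y = hadd y x;
  hadd0 : forall x, hadd x h0 = x;
  haddN : forall x, hadd x (hopp x) = h0;
  hscal1 : forall x, hscal 1 x = x;
  hscalA : forall a b x, hscal a (hscal b x) = hscal (a * b) x;
  hscalDr : forall a x y, hscal a (hadd x y) = hadd (hscal a x) (hscal a y);
  hscalDl : forall a b x, hscal (a + b) x = hadd (hscal a x) (hscal b x);
  hinner_sym : forall x y, hinner x y = hinner y x;
  hinner_addl : forall x y z, hinner (hadd x y) z = hinner x z + hinner y z;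
  hinner_scall : forall a x y, hinner (hscal a x) y = a * hinner x y;
  hinner_pos : forall x, 0 <= hinner x x;
  hinner_def : forall x, hinner x x = 0 -> x = h0;
  hcomplete : forall s : nat -> hcar,
    (forall eps, eps > 0 -> exists N, forall m n, (m >= N)%nat -> (n >= N)%nat ->
        sqrt (hinner (hadd (s m) (hopp (s n))) (hadd (s m) (hopp (s n)))) < eps) ->
    exists l, forall eps, eps > 0 -> exists N, forall n, (n >= N)%nat ->
        sqrt (hinner (hadd (s n) (hopp l)) (hadd (s n) (hopp l))) < eps;
  hseparable : exists d : nat -> hcar, forall x eps, eps > 0 -> exists n,
        sqrt (hinner (hadd x (hopp (d n))) (hadd x (hopp (d n)))) < eps
}.

Section HDefs.
Variable H : Hilbert.

Definition hsub (x y : H) : H := hadd H x (hopp H y).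
Definition inner (x y : H) : R := hinner H x y.
Definition hnorm (x : H) : R := sqrt (inner x x).

Definition is_subspace (D : H -> Prop) : Prop :=
  D (h0 H) /\ (forall x y, D x -> D y -> D (hadd H x y)) /\
  (forall a x, D x -> D (hscal H a x)).

Definition is_linear_op (D : H -> Prop) (T : H -> H) : Prop :=
  is_subspace D /\
  (forall x y, D x -> D y -> T (hadd H x y) = hadd H (T x) (T y)) /\
  (forall a x, D x -> T (hscal H a x) = hscal H a (T x)).

Definition dense_domain (D : H -> Prop) : Prop :=
  forall x eps, eps > 0 -> exists y, D y /\ hnorm (hsub x y) < eps.

(** self-adjoint: D(T^* ) = D(T) and T^* = T, where
    y in D(T^* ) with T^* y = w  iff  <Tx,y> = <x,w> for all x in D(T). *)
Definition self_adjoint (D : H -> Prop) (T : H -> H) : Prop :=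
  forall y w, (forall x, D x -> inner (T x) y = inner x w) <-> (D y /\ w = T y).

Definition nonnegative_op (D : H -> Prop) (T : H -> H) : Prop :=
  forall x, D x -> 0 <= inner (T x) x.

Definition sa_nonneg_op (D : H -> Prop) (T : H -> H) : Prop :=
  is_linear_op D T /\ dense_domain D /\ self_adjoint D T /\ nonnegative_op D T.

(** (DB,B) is the nonnegative self-adjoint square root A^{1/2} of (DA,A):
    B is self-adjoint nonnegative and B o B = A, with
    D(A) = { x in D(B) | B x in D(B) }. *)
Definition is_sqrt_op (DA : H -> Prop) (A : H -> H) (DB : H -> Prop) (B : H -> H)
  : Prop :=
  sa_nonneg_op DB B /\
  (forall x, DA x <-> (DB x /\ DB (B x))) /\
  (forall x, DA x -> A x = B (B x)).

Definition kerA (DA : H -> Prop) (A : H -> H) (x : H) : Prop := DA x /\ A x = h0 H.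

Definition orth (M : H -> Prop) (y : H) : Prop := forall x, M x -> inner x y = 0.

Definition is_orth_proj (M : H -> Prop) (Q : H -> H) : Prop :=
  forall x, M (Q x) /\ (forall y, M y -> inner (hsub x (Q x)) y = 0).

Definition half_line (t : R) : Prop := 0 <= t.

Definition hcont_on (S : R -> Prop) (f : R -> H) : Prop :=
  forall t, S t -> forall eps, eps > 0 -> exists eta, eta > 0 /\
    forall s, S s -> Rabs (s - t) < eta -> hnorm (hsub (f s) (f t)) < eps.

Definition hderiv_on (S : R -> Prop) (f f' : R -> H) : Prop :=
  forall t, S t -> forall eps, eps > 0 -> exists eta, eta > 0 /\
    forall s, S s -> Rabs (s - t) < eta ->
      hnorm (hsub (hsub (f s) (f t)) (hscal H (s - t) (f' t))) <= eps * Rabs (s - t).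

End HDefs.

Definition rcont_on (S : R -> Prop) (f : R -> R) : Prop :=
  forall t, S t -> forall eps, eps > 0 -> exists eta, eta > 0 /\
    forall s, S s -> Rabs (s - t) < eta -> Rabs (f s - f t) < eps.

Definition rderiv_on (S : R -> Prop) (f f' : R -> R) : Prop :=
  forall t, S t -> forall eps, eps > 0 -> exists eta, eta > 0 /\
    forall s, S s -> Rabs (s - t) < eta ->
      Rabs (f s - f t - (s - t) * f' t) <= eps * Rabs (s - t).

Definition C1_on (S : R -> Prop) (f f' : R -> R) : Prop :=
  rderiv_on S f f' /\ rcont_on S f'.

(** * Weak solutions of u'' + 2 delta u' + A u = g on [0,oo)
    (B = A^{1/2} with domain DB):
    u in C^0([0,oo), D(A^{1/2})) /\ C^1([0,oo), H), with derivative u', and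
    for every v in D(A^{1/2}), t |-> <u'(t),v> is differentiable on [0,oo) with
    d/dt <u',v> + 2 delta <u',v> + <A^{1/2}u, A^{1/2}v> = <g,v>. *)
Definition weak_solution (H : Hilbert) (DB : H -> Prop) (B : H -> H) (delta : R)
  (g u u' : R -> H) : Prop :=
  (forall t, half_line t -> DB (u t)) /\
  hcont_on H half_line u /\
  hcont_on H half_line (fun t => B (u t)) /\
  hderiv_on H half_line u u' /\
  hcont_on H half_line u' /\
  (forall v, DB v ->
     rderiv_on half_line (fun t => inner H (u' t) v)
       (fun t => inner H (g t) v - 2 * delta * inner H (u' t) v
                 - inner H (B (u t)) (B v))).

Definition energy (H : Hilbert) (B : H -> H) (u u' : R -> H) (t : R) : R :=
  hnorm H (u' t) ^ 2 + hnorm H (B (u t)) ^ 2.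

Definition energy_hat (H : Hilbert) (B Q : H -> H) (mu : R) (u u' : R -> H) (t : R)
  : R := energy H B u u' t + 2 * mu * inner H (u' t) (Q (u t)).

Definition Gd (H : Hilbert) (B : H -> H) (d : R) (u u' : R -> H) (t : R) : R :=
  energy H B u u' t / Rpower (hnorm H (u t)) (2 + d).

Definition Gd_hat (H : Hilbert) (B Q : H -> H) (mu d : R) (u u' : R -> H) (t : R)
  : R := energy_hat H B Q mu u u' t / Rpower (hnorm H (u t)) (2 + d).

Definition mu_const (nu delta : R) : R :=
  Rmin (Rmin (1/2) (nu / 2)) (Rmin (delta / 2) (nu / (5 * delta))).

(** open interval (a,b), b = None meaning b = +oo *)
Definition in_interval (a : R) (b : option R) (t : R) : Prop :=
  a < t /\ match b with Some b' => t < b' | None => True end.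

(* For a weak solution the energy identity E' = 2 <g, u'> - 4 delta |u'|^2 is not available
   directly.  It is obtained by regularization (Lions-Magenes): pairing u' with the central
   difference quotient (u(t+h) - u(t-h)) / 2h and replacing |A^(1/2) u|^2 by a Steklov average
   makes the weak formulation applicable, and h -> 0 yields E'.  The cross term <u', Q u> is
   differentiated with the weak formulation as well, since A^(1/2) Q = A^(1/2).  The
   inequality |Q u|^2 <= |A^(1/2) u|^2 / nu, Cauchy-Schwarz and Young's inequality, together
   with the choice of mu, then give E/2 <= Eh <= 2 E and Eh' <= - mu/2 Eh + 2 |g|^2 / delta.
   Part (2) follows by differentiating Eh |u|^(-(2+d)), using
   d/dt |u|^(-(2+d)) = -(2+d) |u|^(-(4+d)) <u, u'> and |u'| <= E^(1/2). *)

From Stdlib Require Import Reals Lra Psatz.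
From Coquelicot Require Import Coquelicot.
Open Scope R_scope.

Lemma Rabs_le_inv x y : Rabs x <= y -> - y <= x <= y.
Proof. intros. pose proof (Rle_abs x). pose proof (Rle_abs (- x)). rewrite Rabs_Ropp in *. lra. Qed.

Lemma Rabs_sub_le_near q r h x : r - h <= q <= r + h -> Rabs (q - x) <= Rabs (r - x) + h.
Proof.
  intros Hq. pose proof (Rle_abs (r - x)). pose proof (Rle_abs (- (r - x))).
  rewrite Rabs_Ropp in *. apply Rabs_le. lra.
Qed.

Section InnerProduct.
Variable H : Hilbert.

Lemma inner_sym x y : inner H x y = inner H y x.
Proof. apply hinner_sym. Qed.

Lemma inner_addl x y z : inner H (hadd H x y) z = inner H x z + inner H y z.
Proof. apply hinner_addl. Qed.

Lemma inner_addr x y z : inner H z (hadd H x y) = inner H z x + inner H z y.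
Proof. rewrite !(inner_sym z). apply inner_addl. Qed.

Lemma inner_scall a x y : inner H (hscal H a x) y = a * inner H x y.
Proof. apply hinner_scall. Qed.

Lemma inner_scalr a x y : inner H y (hscal H a x) = a * inner H y x.
Proof. rewrite !(inner_sym y). apply inner_scall. Qed.

Lemma inner_0l y : inner H (h0 H) y = 0.
Proof. pose proof (inner_addl (h0 H) (h0 H) y) as E. rewrite hadd0 in E. lra. Qed.

Lemma inner_0r y : inner H y (h0 H) = 0.
Proof. rewrite inner_sym. apply inner_0l. Qed.

Lemma inner_oppl x y : inner H (hopp H x) y = - inner H x y.
Proof.
  pose proof (inner_addl x (hopp H x) y) as E. rewrite haddN, inner_0l in E. lra.
Qed.

Lemma inner_subl x y z : inner H (hsub H x y) z = inner H x z - inner H y z.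
Proof. unfold hsub. rewrite inner_addl, inner_oppl. ring. Qed.

Lemma inner_subr x y z : inner H z (hsub H x y) = inner H z x - inner H z y.
Proof. rewrite !(inner_sym z). apply inner_subl. Qed.

Lemma inner_ge0 x : 0 <= inner H x x.
Proof. apply hinner_pos. Qed.

Lemma inner_eq0 x : inner H x x = 0 -> x = h0 H.
Proof. apply hinner_def. Qed.

Lemma inner_comb a b c e y :
  inner H (hsub H (hsub H a b) (hscal H c e)) y = inner H a y - inner H b y - c * inner H e y.
Proof. rewrite !inner_subl, inner_scall. ring. Qed.

Lemma hsub_eq0 x y : hsub H x y = h0 H -> x = y.
Proof.
  intros E. rewrite <- (hadd0 H x), <- (haddN H y), haddA, (haddC H x y), <- haddA.
  fold (hsub H x y). rewrite E. apply hadd0.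
Qed.

Lemma inner_oppr x y : inner H y (hopp H x) = - inner H y x.
Proof. rewrite !(inner_sym y). apply inner_oppl. Qed.

Lemma heq_of_inner_sub x y : inner H (hsub H x y) (hsub H x y) = 0 -> x = y.
Proof. intros E. apply hsub_eq0, inner_eq0, E. Qed.

Lemma hopp_scal x : hopp H x = hscal H (-1) x.
Proof.
  apply heq_of_inner_sub.
  rewrite !inner_subl, !inner_subr, !inner_oppl, !inner_oppr, !inner_scall, !inner_scalr. ring.
Qed.

Lemma hscal_h0 a : hscal H a (h0 H) = h0 H.
Proof.
  apply heq_of_inner_sub. rewrite !inner_subl, !inner_subr, !inner_scall, !inner_scalr, !inner_0l.
  ring.
Qed.

Lemma hsub_hsub x y : hsub H x (hsub H x y) = y.
Proof. apply heq_of_inner_sub. rewrite !inner_subl, !inner_subr, (inner_sym y x). ring. Qed.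

Lemma hnorm_ge0 x : 0 <= hnorm H x.
Proof. apply sqrt_pos. Qed.

Lemma hnorm_sq x : hnorm H x ^ 2 = inner H x x.
Proof. unfold hnorm. rewrite pow2_sqrt; auto. apply inner_ge0. Qed.

Lemma hnorm_mul_self x : hnorm H x * hnorm H x = inner H x x.
Proof. rewrite <- hnorm_sq. ring. Qed.

Lemma hnorm_scal c x : hnorm H (hscal H c x) = Rabs c * hnorm H x.
Proof.
  unfold hnorm. rewrite inner_scall, inner_scalr, <- Rmult_assoc, sqrt_mult_alt.
  - f_equal. apply sqrt_Rsqr_abs.
  - apply Rle_0_sqr.
Qed.

Lemma hnorm_pos x : x <> h0 H -> 0 < hnorm H x.
Proof.
  intros Hx. apply sqrt_lt_R0. destruct (inner_ge0 x) as [|E]; auto.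
  exfalso. apply Hx, inner_eq0. auto.
Qed.

Lemma hnorm_le_of_sqr x c : 0 <= c -> inner H x x <= c * c -> hnorm H x <= c.
Proof.
  intros. unfold hnorm. rewrite <- (sqrt_square c) by auto. apply sqrt_le_1_alt. auto.
Qed.

Lemma cauchy_schwarz_sqr x y : inner H x y * inner H x y <= inner H x x * inner H y y.
Proof.
  pose proof (inner_ge0 x) as Hx. pose proof (inner_ge0 y) as Hy.
  destruct (Req_dec (inner H y y) 0) as [Hy0|Hy0].
  - rewrite (inner_eq0 y Hy0), inner_0r, inner_0l. lra.
  - set (t := - inner H x y / inner H y y).
    pose proof (inner_ge0 (hadd H x (hscal H t y))) as P.
    rewrite inner_addl, !inner_addr, !inner_scall, !inner_scalr, (inner_sym y x) in P.
    replace (inner H x x + t * inner H x y + (t * inner H x y + t * (t * inner H y y)))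
      with (inner H x x - inner H x y * inner H x y / inner H y y) in P
      by (unfold t; field; auto).
    assert (inner H x y * inner H x y / inner H y y * inner H y y <= inner H x x * inner H y y)
      by (apply Rmult_le_compat_r; lra).
    replace (inner H x y * inner H x y / inner H y y * inner H y y)
      with (inner H x y * inner H x y) in * by (field; auto).
    lra.
Qed.

Lemma cauchy_schwarz x y : Rabs (inner H x y) <= hnorm H x * hnorm H y.
Proof.
  rewrite <- (Rabs_pos_eq (hnorm H x * hnorm H y))
    by (apply Rmult_le_pos; apply hnorm_ge0).
  apply Rsqr_le_abs_0. unfold Rsqr.
  replace (hnorm H x * hnorm H y * (hnorm H x * hnorm H y))
    with (hnorm H x * hnorm H x * (hnorm H y * hnorm H y)) by ring.
  rewrite !hnorm_mul_self. apply cauchy_schwarz_sqr.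
Qed.

Lemma hnorm_le_add_sub x y : hnorm H x <= hnorm H y + hnorm H (hsub H x y).
Proof.
  pose proof (hnorm_ge0 y). pose proof (hnorm_ge0 (hsub H x y)).
  apply hnorm_le_of_sqr; [lra|].
  pose proof (cauchy_schwarz y (hsub H x y)) as C. apply Rabs_le_inv in C.
  rewrite Rmult_plus_distr_l, !Rmult_plus_distr_r, !hnorm_mul_self.
  rewrite !inner_subl, !inner_subr, (inner_sym y x) in *. lra.
Qed.

Lemma inner_close p q p0 q0 th :
  0 <= th <= 1 -> hnorm H (hsub H p p0) <= th -> hnorm H (hsub H q q0) <= th ->
  Rabs (inner H p q - inner H p0 q0) <= th * (hnorm H p0 + hnorm H q0 + 1).
Proof.
  intros Hth Hp Hq.
  replace (inner H p q - inner H p0 q0)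
    with (inner H (hsub H p p0) q + inner H p0 (hsub H q q0))
    by (rewrite inner_subl, inner_subr; ring).
  eapply Rle_trans; [apply Rabs_triang|].
  pose proof (cauchy_schwarz (hsub H p p0) q). pose proof (cauchy_schwarz p0 (hsub H q q0)).
  pose proof (hnorm_le_add_sub q q0).
  pose proof (hnorm_ge0 p0). pose proof (hnorm_ge0 q0). pose proof (hnorm_ge0 q).
  pose proof (hnorm_ge0 (hsub H p p0)). pose proof (hnorm_ge0 (hsub H q q0)).
  nra.
Qed.

Lemma hnorm_sub_scal0 x y : hnorm H (hsub H x (hscal H 0 y)) = hnorm H x.
Proof.
  unfold hnorm. f_equal. rewrite !inner_subl, !inner_subr, !inner_scall, !inner_scalr. ring.
Qed.

Lemma inner_quotient_le p D h th P :
  h > 0 -> hnorm H D <= th * (2 * h) -> hnorm H p <= P ->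
  Rabs (inner H p D / (2 * h)) <= P * th.
Proof.
  intros Hh HD Hp. unfold Rdiv. rewrite Rabs_mult, Rabs_inv, (Rabs_pos_eq (2 * h)) by lra.
  apply Rmult_le_reg_r with (2 * h); [lra|]. rewrite Rmult_assoc, Rinv_l, Rmult_1_r by lra.
  eapply Rle_trans; [apply cauchy_schwarz|].
  pose proof (hnorm_ge0 D). pose proof (hnorm_ge0 p).
  rewrite Rmult_assoc. apply Rmult_le_compat; auto.
Qed.

End InnerProduct.

Definition eps_near (S : R -> Prop) (t : R) (P : R -> R -> Prop) : Prop :=
  forall eps, eps > 0 -> exists eta, eta > 0 /\
    forall s, S s -> Rabs (s - t) < eta -> P eps s.

Definition rderiv_at (S : R -> Prop) (f : R -> R) (l t : R) : Prop :=
  eps_near S t (fun eps s => Rabs (f s - f t - (s - t) * l) <= eps * Rabs (s - t)).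

Definition rcont_at (S : R -> Prop) (f : R -> R) (t : R) : Prop :=
  eps_near S t (fun eps s => Rabs (f s - f t) < eps).

Definition hderiv_at (H : Hilbert) (S : R -> Prop) (f : R -> H) (l : H) (t : R) : Prop :=
  eps_near S t (fun eps s =>
    hnorm H (hsub H (hsub H (f s) (f t)) (hscal H (s - t) l)) <= eps * Rabs (s - t)).

Definition hcont_at (H : Hilbert) (S : R -> Prop) (f : R -> H) (t : R) : Prop :=
  eps_near S t (fun eps s => hnorm H (hsub H (f s) (f t)) < eps).

Definition whole_line : R -> Prop := fun _ => True.

Definition neighbourhood (S : R -> Prop) (t : R) : Prop :=
  exists r, r > 0 /\ forall s, Rabs (s - t) < r -> S s.

Section EpsNear.
Variables (S : R -> Prop) (t : R).

Lemma eps_near_impl (P P' : R -> R -> Prop) :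
  (forall eps s, S s -> P eps s -> P' eps s) -> eps_near S t P -> eps_near S t P'.
Proof.
  intros I D eps He. destruct (D eps He) as [eta [Heta Hn]].
  exists eta; split; auto.
Qed.

Lemma eps_near_and (P P' : R -> R -> Prop) :
  eps_near S t P -> eps_near S t P' -> eps_near S t (fun eps s => P eps s /\ P' eps s).
Proof.
  intros D D' eps He.
  destruct (D eps He) as [e1 [He1 P1]]. destruct (D' eps He) as [e2 [He2 P2]].
  exists (Rmin e1 e2); split; [apply Rmin_pos; auto|].
  intros s Ss Hs. apply Rmin_Rgt in Hs as [Hs1 Hs2]. auto.
Qed.

Lemma eps_near_restrict (S' : R -> Prop) (P : R -> R -> Prop) :
  (forall s, S' s -> S s) -> eps_near S t P -> eps_near S' t P.
Proof.
  intros I D eps He. destruct (D eps He) as [eta [Heta Hn]].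
  exists eta; split; auto.
Qed.

Lemma eps_near_local (P : R -> R -> Prop) :
  neighbourhood S t -> eps_near S t P -> eps_near whole_line t P.
Proof.
  intros [r [Hr Hnb]] D eps He. destruct (D eps He) as [eta [Heta Hn]].
  exists (Rmin eta r); split; [apply Rmin_pos; auto|].
  intros s _ Hs. apply Rmin_Rgt in Hs as [Hs1 Hs2]. auto.
Qed.

End EpsNear.

Lemma eps_near_shift (P : R -> R -> Prop) t h :
  eps_near whole_line (t + h) P ->
  eps_near whole_line t (fun eps s => P eps (s + h)).
Proof.
  intros D eps He. destruct (D eps He) as [eta [Heta Hn]].
  exists eta; split; auto. intros s _ Hs. apply Hn; [exact I|].
  replace (s + h - (t + h)) with (s - t) by ring. auto.
Qed.

Lemma neighbourhood_half_line t : 0 < t -> neighbourhood half_line t.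
Proof.
  intros Ht. exists t; split; auto. intros s Hs. apply Rabs_def2 in Hs. red. lra.
Qed.

Section RealCalculus.
Variable S : R -> Prop.

Lemma rderiv_cont f l t : rderiv_at S f l t -> rcont_at S f t.
Proof.
  intros D eps He. destruct (D 1 ltac:(lra)) as [eta [Heta P]].
  exists (Rmin eta (eps / (Rabs l + 2))).
  pose proof (Rabs_pos l).
  split; [apply Rmin_pos; auto; apply Rdiv_lt_0_compat; lra|].
  intros s Ss Hs. apply Rmin_Rgt in Hs as [Hs1 Hs2].
  specialize (P s Ss Hs1).
  assert (Rabs (s - t) * (Rabs l + 2) < eps).
  { apply (Rmult_lt_compat_r (Rabs l + 2)) in Hs2; [|lra].
    unfold Rdiv in Hs2. rewrite Rmult_assoc, Rinv_l in Hs2; lra. }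
  replace (f s - f t) with ((f s - f t - (s - t) * l) + (s - t) * l) by ring.
  eapply Rle_lt_trans; [apply Rabs_triang|]. rewrite Rabs_mult.
  pose proof (Rabs_pos (s - t)). nra.
Qed.

Lemma rderiv_ext f f' l t :
  (forall s, S s -> f s = f' s) -> S t -> rderiv_at S f l t -> rderiv_at S f' l t.
Proof.
  intros E St. apply eps_near_impl. intros eps s Ss. rewrite <- !E; auto.
Qed.

Lemma rderiv_eq f l l' t : l = l' -> rderiv_at S f l t -> rderiv_at S f l' t.
Proof. intros ->. auto. Qed.

Lemma rderiv_plus f g l m t :
  rderiv_at S f l t -> rderiv_at S g m t -> rderiv_at S (fun r => f r + g r) (l + m) t.
Proof.
  intros Df Dg eps He.
  destruct (eps_near_and _ _ _ _ Df Dg (eps / 2) ltac:(lra)) as [eta [Heta P]].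
  exists eta; split; auto. intros s Ss Hs. destruct (P s Ss Hs) as [P1 P2].
  replace (f s + g s - (f t + g t) - (s - t) * (l + m))
    with ((f s - f t - (s - t) * l) + (g s - g t - (s - t) * m)) by ring.
  eapply Rle_trans; [apply Rabs_triang|]. lra.
Qed.

Lemma rderiv_scal c f l t : rderiv_at S f l t -> rderiv_at S (fun r => c * f r) (c * l) t.
Proof.
  intros Df eps He. pose proof (Rabs_pos c).
  destruct (Df (eps / (Rabs c + 1))) as [eta [Heta P]]; [apply Rdiv_lt_0_compat; lra|].
  exists eta; split; auto. intros s Ss Hs. specialize (P s Ss Hs).
  replace (c * f s - c * f t - (s - t) * (c * l)) with (c * (f s - f t - (s - t) * l)) by ring.
  rewrite Rabs_mult.
  apply Rle_trans with (Rabs c * (eps / (Rabs c + 1) * Rabs (s - t))).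
  - apply Rmult_le_compat_l; auto.
  - pose proof (Rabs_pos (s - t)).
    replace (Rabs c * (eps / (Rabs c + 1) * Rabs (s - t)))
      with (Rabs c / (Rabs c + 1) * (eps * Rabs (s - t))) by (field; lra).
    assert (Rabs c / (Rabs c + 1) <= 1).
    { apply Rmult_le_reg_r with (Rabs c + 1); [lra|].
      unfold Rdiv. rewrite Rmult_assoc, Rinv_l; lra. }
    assert (0 <= eps * Rabs (s - t)) by nra. nra.
Qed.

Lemma rderiv_mult f g l m t :
  rderiv_at S f l t -> rderiv_at S g m t ->
  rderiv_at S (fun r => f r * g r) (l * g t + f t * m) t.
Proof.
  intros Df Dg eps He.
  set (K := Rabs (g t) + 1 + Rabs (f t) + Rabs l).
  pose proof (Rabs_pos (g t)). pose proof (Rabs_pos (f t)). pose proof (Rabs_pos l).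
  assert (HK : K > 0) by (unfold K; lra).
  set (q := Rmin 1 (eps / (3 * K))).
  assert (Hq : 0 < q) by (apply Rmin_pos; [lra|apply Rdiv_lt_0_compat; lra]).
  assert (Hq1 : q <= 1) by apply Rmin_l.
  assert (HqK : q * K <= eps / 3).
  { apply Rle_trans with (eps / (3 * K) * K); [apply Rmult_le_compat_r; [lra|apply Rmin_r]|].
    right. field. lra. }
  destruct (eps_near_and _ _ _ _ (eps_near_and _ _ _ _ Df Dg) (rderiv_cont g m t Dg) q Hq)
    as [eta [Heta P]].
  exists eta; split; auto. intros s Ss Hs. destruct (P s Ss Hs) as [[P1 P2] P3].
  replace (f s * g s - f t * g t - (s - t) * (l * g t + f t * m)) with
    ((f s - f t - (s - t) * l) * g s + f t * (g s - g t - (s - t) * m)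
     + (s - t) * l * (g s - g t)) by ring.
  assert (Hgs : Rabs (g s) <= Rabs (g t) + 1).
  { replace (g s) with (g t + (g s - g t)) by ring.
    eapply Rle_trans; [apply Rabs_triang|]. lra. }
  pose proof (Rabs_pos (g s)). pose proof (Rabs_pos (s - t)). pose proof (Rabs_pos (g s - g t)).
  eapply Rle_trans; [apply Rabs_triang|].
  eapply Rle_trans; [apply Rplus_le_compat_r, Rabs_triang|].
  rewrite !Rabs_mult.
  assert (Rabs (f s - f t - (s - t) * l) * Rabs (g s) <= q * Rabs (s - t) * K)
    by (apply Rmult_le_compat; auto; [apply Rabs_pos|unfold K; lra]).
  assert (Rabs (f t) * Rabs (g s - g t - (s - t) * m) <= K * (q * Rabs (s - t)))
    by (apply Rmult_le_compat; auto; [apply Rabs_pos|unfold K; lra]).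
  assert (Rabs (s - t) * Rabs l * Rabs (g s - g t) <= Rabs (s - t) * K * q).
  { apply Rmult_le_compat; try lra; [apply Rmult_le_pos; lra|].
    apply Rmult_le_compat_l; [lra|unfold K; lra]. }
  nra.
Qed.

Lemma derivable_pt_lim_eps f t l : derivable_pt_lim f t l -> rderiv_at whole_line f l t.
Proof.
  intros D eps He. destruct (D eps He) as [[d Hd] P]. exists d; split; auto.
  intros s _ Hs. destruct (Req_dec s t) as [->|Hst].
  - replace (f t - f t - (t - t) * l) with 0 by ring. rewrite Rabs_R0.
    pose proof (Rabs_pos (t - t)). nra.
  - specialize (P (s - t) ltac:(lra) Hs). replace (t + (s - t)) with s in P by ring.
    replace (f s - f t - (s - t) * l) with (((f s - f t) / (s - t) - l) * (s - t))
      by (field; lra).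
    rewrite Rabs_mult. apply Rmult_le_compat_r; [apply Rabs_pos|lra].
Qed.

Lemma rderiv_derivable_pt_lim f l t : rderiv_at whole_line f l t -> derivable_pt_lim f t l.
Proof.
  intros D eps He. destruct (D (eps / 2) ltac:(lra)) as [eta [Heta P]].
  exists (mkposreal eta Heta). intros h Hh Hhe. simpl in Hhe.
  specialize (P (t + h) I). replace (t + h - t) with h in P by ring. specialize (P Hhe).
  replace ((f (t + h) - f t) / h - l) with ((f (t + h) - f t - h * l) / h) by (field; auto).
  unfold Rdiv. rewrite Rabs_mult, Rabs_inv.
  assert (0 < Rabs h) by (apply Rabs_pos_lt; auto).
  apply (Rmult_le_compat_r (/ Rabs h)) in P; [|left; apply Rinv_0_lt_compat; auto].
  rewrite Rmult_assoc, Rinv_r in P; lra.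
Qed.

Lemma rderiv_comp phi m f l t :
  rderiv_at S f l t -> derivable_pt_lim phi (f t) m ->
  rderiv_at S (fun r => phi (f r)) (m * l) t.
Proof.
  intros D L eps He.
  pose proof (Rabs_pos l). pose proof (Rabs_pos m).
  set (K := Rabs l + 1). assert (HK : 0 < K) by (unfold K; lra).
  set (e1 := Rmin 1 (eps / (2 * (Rabs m + 1)))).
  assert (He1 : 0 < e1) by (apply Rmin_pos; [lra|apply Rdiv_lt_0_compat; lra]).
  destruct (derivable_pt_lim_eps phi (f t) m L (eps / (2 * K))) as [d [Hd P1]];
    [apply Rdiv_lt_0_compat; lra|].
  destruct (D e1 He1) as [eta [Heta P2]].
  exists (Rmin eta (d / K)); split; [apply Rmin_pos; [lra|apply Rdiv_lt_0_compat; lra]|].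
  intros s Ss Hs. apply Rmin_Rgt in Hs as [Hs1 Hs2].
  specialize (P2 s Ss Hs1). pose proof (Rabs_pos (s - t)).
  assert (Hf : Rabs (f s - f t) <= K * Rabs (s - t)).
  { replace (f s - f t) with ((f s - f t - (s - t) * l) + (s - t) * l) by ring.
    eapply Rle_trans; [apply Rabs_triang|]. rewrite Rabs_mult.
    assert (e1 <= 1) by apply Rmin_l. unfold K. nra. }
  assert (Hfd : Rabs (f s - f t) < d).
  { apply Rmult_lt_compat_l with (r := K) in Hs2; [|lra].
    replace (K * (d / K)) with d in Hs2 by (field; lra). lra. }
  specialize (P1 (f s) I Hfd).
  replace (phi (f s) - phi (f t) - (s - t) * (m * l)) with
    ((phi (f s) - phi (f t) - (f s - f t) * m) + m * (f s - f t - (s - t) * l)) by ring.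
  eapply Rle_trans; [apply Rabs_triang|]. rewrite Rabs_mult.
  assert (eps / (2 * K) * Rabs (f s - f t) <= eps / 2 * Rabs (s - t)).
  { replace (eps / 2 * Rabs (s - t)) with (eps / (2 * K) * (K * Rabs (s - t))) by (field; lra).
    apply Rmult_le_compat_l; auto. left; apply Rdiv_lt_0_compat; lra. }
  assert (Rabs m * e1 <= eps / 2).
  { apply Rle_trans with (Rabs m * (eps / (2 * (Rabs m + 1)))).
    - apply Rmult_le_compat_l; [lra|apply Rmin_r].
    - replace (Rabs m * (eps / (2 * (Rabs m + 1)))) with (eps / 2 * (Rabs m / (Rabs m + 1)))
        by (field; lra).
      assert (Rabs m / (Rabs m + 1) <= 1).
      { apply Rmult_le_reg_r with (Rabs m + 1); [lra|].
        unfold Rdiv. rewrite Rmult_assoc, Rinv_l; lra. }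
      nra. }
  assert (Rabs m * Rabs (f s - f t - (s - t) * l) <= Rabs m * (e1 * Rabs (s - t)))
    by (apply Rmult_le_compat_l; lra).
  nra.
Qed.

Lemma rcont_const c t : rcont_at S (fun _ => c) t.
Proof.
  intros eps He. exists 1; split; [lra|]. intros s _ _.
  replace (c - c) with 0 by ring. rewrite Rabs_R0. lra.
Qed.

Lemma rcont_plus f g t : rcont_at S f t -> rcont_at S g t -> rcont_at S (fun r => f r + g r) t.
Proof.
  intros Cf Cg eps He.
  destruct (eps_near_and _ _ _ _ Cf Cg (eps / 2) ltac:(lra)) as [eta [Heta P]].
  exists eta; split; auto. intros s Ss Hs. destruct (P s Ss Hs) as [P1 P2].
  replace (f s + g s - (f t + g t)) with ((f s - f t) + (g s - g t)) by ring.
  eapply Rle_lt_trans; [apply Rabs_triang|]. lra.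
Qed.

Lemma rcont_minus f g t : rcont_at S f t -> rcont_at S g t -> rcont_at S (fun r => f r - g r) t.
Proof.
  intros Cf Cg eps He.
  destruct (eps_near_and _ _ _ _ Cf Cg (eps / 2) ltac:(lra)) as [eta [Heta P]].
  exists eta; split; auto. intros s Ss Hs. destruct (P s Ss Hs) as [P1 P2].
  replace (f s - g s - (f t - g t)) with ((f s - f t) + - (g s - g t)) by ring.
  eapply Rle_lt_trans; [apply Rabs_triang|]. rewrite Rabs_Ropp. lra.
Qed.

Lemma rcont_mult f g t : rcont_at S f t -> rcont_at S g t -> rcont_at S (fun r => f r * g r) t.
Proof.
  intros Cf Cg eps He.
  pose proof (Rabs_pos (f t)). pose proof (Rabs_pos (g t)).
  set (K := Rabs (f t) + Rabs (g t) + 1).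
  set (th := Rmin 1 (eps / (2 * K))).
  assert (Hth : 0 < th) by (apply Rmin_pos; [lra|apply Rdiv_lt_0_compat; unfold K; lra]).
  assert (th <= 1) by apply Rmin_l.
  assert (th * K <= eps / 2).
  { apply Rle_trans with (eps / (2 * K) * K);
      [apply Rmult_le_compat_r; [unfold K; lra|apply Rmin_r]|].
    right. field. unfold K; lra. }
  destruct (eps_near_and _ _ _ _ Cf Cg th Hth) as [eta [Heta P]].
  exists eta; split; auto. intros s Ss Hs. destruct (P s Ss Hs) as [P1 P2].
  replace (f s * g s - f t * g t) with ((f s - f t) * g s + f t * (g s - g t)) by ring.
  eapply Rle_lt_trans; [apply Rabs_triang|]. rewrite !Rabs_mult.
  assert (Rabs (g s) <= Rabs (g t) + 1).
  { replace (g s) with (g t + (g s - g t)) by ring. eapply Rle_trans; [apply Rabs_triang|]. lra. }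
  pose proof (Rabs_pos (f s - f t)). pose proof (Rabs_pos (g s - g t)). pose proof (Rabs_pos (g s)).
  assert (Rabs (f s - f t) * Rabs (g s) <= th * (Rabs (g t) + 1)) by (apply Rmult_le_compat; lra).
  assert (Rabs (f t) * Rabs (g s - g t) <= Rabs (f t) * th) by (apply Rmult_le_compat_l; lra).
  unfold K in *. nra.
Qed.

End RealCalculus.

Lemma rderiv_shift f l t h :
  rderiv_at whole_line f l (t + h) -> rderiv_at whole_line (fun r => f (r + h)) l t.
Proof.
  intros D. apply eps_near_shift in D. revert D. apply eps_near_impl.
  intros eps s _. replace (s + h - (t + h)) with (s - t) by ring. auto.
Qed.

Section HilbertCalculus.
Variables (H : Hilbert) (S : R -> Prop).

Lemma hderiv_cont f l t : hderiv_at H S f l t -> hcont_at H S f t.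
Proof.
  intros D eps He. destruct (D 1 ltac:(lra)) as [eta [Heta P]].
  pose proof (hnorm_ge0 H l). set (K := hnorm H l + 2).
  exists (Rmin eta (eps / K)).
  split; [apply Rmin_pos; [lra|apply Rdiv_lt_0_compat; unfold K; lra]|].
  intros s Ss Hs. apply Rmin_Rgt in Hs as [Hs1 Hs2]. specialize (P s Ss Hs1).
  pose proof (hnorm_le_add_sub H (hsub H (f s) (f t)) (hscal H (s - t) l)) as T.
  rewrite hnorm_scal in T.
  assert (Rabs (s - t) * K < eps).
  { apply Rmult_lt_compat_r with (r := K) in Hs2; [|unfold K; lra].
    replace (eps / K * K) with eps in Hs2 by (field; unfold K; lra). lra. }
  unfold K in *. pose proof (Rabs_pos (s - t)). nra.
Qed.

Lemma hderiv_inner_const f l t y :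
  hderiv_at H S f l t -> rderiv_at S (fun r => inner H (f r) y) (inner H l y) t.
Proof.
  intros D eps He. pose proof (hnorm_ge0 H y).
  destruct (D (eps / (hnorm H y + 1))) as [eta [Heta P]]; [apply Rdiv_lt_0_compat; lra|].
  exists eta; split; auto. intros s Ss Hs. specialize (P s Ss Hs).
  rewrite <- inner_comb. eapply Rle_trans; [apply cauchy_schwarz|].
  pose proof (Rabs_pos (s - t)).
  apply Rle_trans with (eps / (hnorm H y + 1) * Rabs (s - t) * hnorm H y);
    [apply Rmult_le_compat_r; auto|].
  replace (eps / (hnorm H y + 1) * Rabs (s - t) * hnorm H y)
    with (hnorm H y / (hnorm H y + 1) * (eps * Rabs (s - t))) by (field; lra).
  assert (hnorm H y / (hnorm H y + 1) <= 1).
  { apply Rmult_le_reg_r with (hnorm H y + 1); [lra|].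
    unfold Rdiv. rewrite Rmult_assoc, Rinv_l; lra. }
  assert (0 <= eps * Rabs (s - t)) by nra. nra.
Qed.

Lemma hcont_inner f g t :
  hcont_at H S f t -> hcont_at H S g t -> rcont_at S (fun r => inner H (f r) (g r)) t.
Proof.
  intros Cf Cg eps He.
  pose proof (hnorm_ge0 H (f t)). pose proof (hnorm_ge0 H (g t)).
  set (K := hnorm H (f t) + hnorm H (g t) + 1).
  set (th := Rmin 1 (eps / (2 * K))).
  assert (Hth : 0 < th) by (apply Rmin_pos; [lra|apply Rdiv_lt_0_compat; unfold K; lra]).
  assert (th <= 1) by apply Rmin_l.
  assert (th * K <= eps / 2).
  { apply Rle_trans with (eps / (2 * K) * K);
      [apply Rmult_le_compat_r; [unfold K; lra|apply Rmin_r]|].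
    right. field. unfold K; lra. }
  destruct (eps_near_and _ _ _ _ Cf Cg th Hth) as [eta [Heta P]].
  exists eta; split; auto. intros s Ss Hs. destruct (P s Ss Hs) as [P1 P2].
  pose proof (inner_close H (f s) (g s) (f t) (g t) th ltac:(lra) ltac:(lra) ltac:(lra)).
  unfold K in *. lra.
Qed.

Lemma rderiv_inner_weak (w z : R -> H) psi z' t :
  rderiv_at S (fun r => inner H (w r) (z t)) psi t -> hcont_at H S w t ->
  hderiv_at H S z z' t ->
  rderiv_at S (fun r => inner H (w r) (z r)) (psi + inner H (w t) z') t.
Proof.
  intros D1 C D2 eps He.
  pose proof (hnorm_ge0 H (w t)). pose proof (hnorm_ge0 H z').
  set (K1 := hnorm H (w t) + 1). set (K2 := hnorm H z' + 1).
  set (th := Rmin 1 (eps / (3 * (K1 + K2)))).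
  assert (Hth : 0 < th) by (apply Rmin_pos; [lra|apply Rdiv_lt_0_compat; unfold K1, K2; lra]).
  assert (Hth1 : th <= 1) by apply Rmin_l.
  assert (HthK : th * (K1 + K2) <= eps / 3).
  { apply Rle_trans with (eps / (3 * (K1 + K2)) * (K1 + K2));
      [apply Rmult_le_compat_r; [unfold K1, K2; lra|apply Rmin_r]|].
    right. field. unfold K1, K2; lra. }
  destruct (eps_near_and _ _ _ _ (eps_near_and _ _ _ _ D1 C) D2 th Hth) as [eta [Heta P]].
  exists eta; split; auto. intros s Ss Hs. destruct (P s Ss Hs) as [[P1 P2] P3].
  set (D := hsub H (hsub H (z s) (z t)) (hscal H (s - t) z')) in *.
  replace (inner H (w s) (z s) - inner H (w t) (z t) - (s - t) * (psi + inner H (w t) z'))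
    with ((inner H (w s) (z t) - inner H (w t) (z t) - (s - t) * psi) + inner H (w s) D
          + (s - t) * inner H (hsub H (w s) (w t)) z')
    by (unfold D; rewrite !inner_subr, inner_scalr, inner_subl; ring).
  assert (Hw : hnorm H (w s) <= K1)
    by (pose proof (hnorm_le_add_sub H (w s) (w t)); unfold K1; lra).
  pose proof (Rabs_pos (s - t)).
  assert (T2 : Rabs (inner H (w s) D) <= K1 * (th * Rabs (s - t))).
  { eapply Rle_trans; [apply cauchy_schwarz|].
    apply Rmult_le_compat; auto; apply hnorm_ge0. }
  assert (T3 : Rabs ((s - t) * inner H (hsub H (w s) (w t)) z') <= Rabs (s - t) * (th * K2)).
  { rewrite Rabs_mult. apply Rmult_le_compat_l; [lra|].
    eapply Rle_trans; [apply cauchy_schwarz|].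
    apply Rmult_le_compat; try apply hnorm_ge0; unfold K2; lra. }
  eapply Rle_trans; [apply Rabs_triang|].
  eapply Rle_trans; [apply Rplus_le_compat_r, Rabs_triang|].
  assert (th * Rabs (s - t) <= eps / 3 * Rabs (s - t)).
  { apply Rmult_le_compat_r; [lra|]. unfold K1, K2 in HthK. nra. }
  assert (K1 * (th * Rabs (s - t)) + Rabs (s - t) * (th * K2) <= 2 * (eps / 3) * Rabs (s - t)).
  { unfold K1, K2 in *. nra. }
  nra.
Qed.

End HilbertCalculus.

Lemma hderiv_shift (H : Hilbert) f l t h :
  hderiv_at H whole_line f l (t + h) -> hderiv_at H whole_line (fun r => f (r + h)) l t.
Proof.
  intros D. apply eps_near_shift in D. revert D. apply eps_near_impl.
  intros eps s _. replace (s + h - (t + h)) with (s - t) by ring. auto.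
Qed.

Lemma hcont_shift (H : Hilbert) f t h :
  hcont_at H whole_line f (t + h) -> hcont_at H whole_line (fun r => f (r + h)) t.
Proof. apply eps_near_shift. Qed.

Lemma mvt_deriv_bound f f' a b l M :
  (forall r, Rmin a b <= r <= Rmax a b -> derivable_pt_lim f r (f' r)) ->
  (forall r, Rmin a b <= r <= Rmax a b -> Rabs (f' r - l) <= M) ->
  Rabs (f b - f a - (b - a) * l) <= M * Rabs (b - a).
Proof.
  intros D Bd.
  destruct (MVT_abs (fun r => f r - l * r) (fun r => f' r - l) a b) as [c [Ec Hc]].
  - intros r Hr. apply derivable_pt_lim_minus; [auto|].
    replace l with (l * 1) at 2 by ring. apply derivable_pt_lim_scal, derivable_pt_lim_id.
  - replace (f b - f a - (b - a) * l) with (f b - l * b - (f a - l * a)) by ring.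
    rewrite Ec. apply Rmult_le_compat_r; [apply Rabs_pos|auto].
Qed.

Lemma difference_quotient_close F f x h K M : h > 0 ->
  (forall r, x - h <= r <= x -> derivable_pt_lim F r (f r)) ->
  (forall r, x - h <= r <= x -> Rabs (f r - K) <= M) ->
  Rabs ((F x - F (x - h)) / h - K) <= M.
Proof.
  intros Hh D Bd.
  pose proof (mvt_deriv_bound F f (x - h) x K M) as MV.
  rewrite Rmin_left, Rmax_right in MV by lra.
  replace (x - (x - h)) with h in MV by ring. rewrite (Rabs_pos_eq h) in MV by lra.
  replace ((F x - F (x - h)) / h - K) with ((F x - F (x - h) - h * K) / h) by (field; lra).
  unfold Rdiv. rewrite Rabs_mult, Rabs_inv, (Rabs_pos_eq h) by lra.
  apply Rmult_le_reg_r with h; [lra|]. rewrite Rmult_assoc, Rinv_l, Rmult_1_r by lra.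
  auto.
Qed.

Lemma hmvt_deriv_bound (H : Hilbert) (u w : R -> H) a b c M :
  (forall r, Rmin a b <= r <= Rmax a b -> hderiv_at H whole_line u (w r) r) ->
  (forall r, Rmin a b <= r <= Rmax a b -> hnorm H (hsub H (w r) c) <= M) ->
  hnorm H (hsub H (hsub H (u b) (u a)) (hscal H (b - a) c)) <= M * Rabs (b - a).
Proof.
  intros D Bd. set (X := hsub H (hsub H (u b) (u a)) (hscal H (b - a) c)).
  assert (HM : 0 <= M)
    by (eapply Rle_trans; [apply hnorm_ge0|apply (Bd a); split; [apply Rmin_l|apply Rmax_l]]).
  (* test the scalar mean value theorem against [X] itself *)
  pose proof (mvt_deriv_bound (fun r => inner H (u r) X) (fun r => inner H (w r) X) a b
                (inner H c X) (M * hnorm H X)) as MV.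
  cbv beta in MV. rewrite <- inner_comb in MV. fold X in MV.
  rewrite Rabs_pos_eq, <- hnorm_mul_self in MV by apply inner_ge0.
  pose proof (hnorm_ge0 H X). pose proof (Rabs_pos (b - a)).
  destruct (Req_dec (hnorm H X) 0) as [Z|Z]; [rewrite Z; nra|].
  apply Rmult_le_reg_l with (hnorm H X); [lra|].
  rewrite <- Rmult_assoc, (Rmult_comm _ M). apply MV.
  - intros r Hr. apply rderiv_derivable_pt_lim, hderiv_inner_const; auto.
  - intros r Hr. rewrite <- inner_subl. eapply Rle_trans; [apply cauchy_schwarz|].
    apply Rmult_le_compat_r; [apply hnorm_ge0|auto].
Qed.

Lemma rderiv_of_approximations S f l t :
  eps_near S t (fun eps s => forall rho, rho > 0 -> exists phi phi' : R -> R,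
    (forall r, Rmin t s <= r <= Rmax t s ->
       derivable_pt_lim phi r (phi' r) /\ Rabs (phi' r - l) <= eps) /\
    Rabs (phi t - f t) <= rho /\ Rabs (phi s - f s) <= rho) ->
  rderiv_at S f l t.
Proof.
  apply eps_near_impl. intros eps s _ Approx.
  apply Rle_plus_epsilon. intros rho Hrho.
  destruct (Approx (rho / 2) ltac:(lra)) as [phi [phi' [Hd [Ht Hs]]]].
  pose proof (mvt_deriv_bound phi phi' t s l eps (fun r Hr => proj1 (Hd r Hr))
                (fun r Hr => proj2 (Hd r Hr))) as MV.
  replace (f s - f t - (s - t) * l)
    with ((phi s - phi t - (s - t) * l) - (phi s - f s) + (phi t - f t)) by ring.
  eapply Rle_trans; [apply Rabs_triang|].
  eapply Rle_trans; [apply Rplus_le_compat_r, Rabs_triang|].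
  rewrite Rabs_Ropp. lra.
Qed.

Lemma rderiv_at_half_line_0 f f' :
  rcont_at half_line f 0 -> (forall t, t > 0 -> rderiv_at whole_line f (f' t) t) ->
  rcont_at half_line f' 0 -> rderiv_at half_line f (f' 0) 0.
Proof.
  intros Cf D Cf' eps He.
  destruct (Cf' eps He) as [eta [Heta P]].
  exists eta; split; auto. intros s Ss Hs. red in Ss.
  rewrite Rminus_0_r in *. rewrite Rabs_pos_eq in Hs by lra.
  destruct (Req_dec s 0) as [->|Hs0].
  { replace (f 0 - f 0 - 0 * f' 0) with 0 by ring. rewrite Rabs_R0. lra. }
  apply Rle_plus_epsilon. intros rho Hrho.
  destruct (Cf (rho / 2) ltac:(lra)) as [e1 [He1 P1]].
  pose proof (Rabs_pos (f' 0)). set (c := Rabs (f' 0) + 1).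
  (* compare with the mean value theorem on [a, s] for a small [a > 0] *)
  set (a := Rmin (s / 2) (Rmin (e1 / 2) (rho / (2 * c)))).
  assert (Ha : 0 < a)
    by (unfold a; repeat apply Rmin_pos; try lra; apply Rdiv_lt_0_compat; unfold c; lra).
  assert (Has : a <= s / 2) by apply Rmin_l.
  assert (Hae : a <= e1 / 2) by (eapply Rle_trans; [apply Rmin_r|apply Rmin_l]).
  assert (Har : a <= rho / (2 * c)) by (eapply Rle_trans; [apply Rmin_r|apply Rmin_r]).
  pose proof (mvt_deriv_bound f f' a s (f' 0) eps) as MV.
  rewrite Rmin_left, Rmax_right, (Rabs_pos_eq (s - a)) in MV by lra.
  specialize (MV (fun r Hr => rderiv_derivable_pt_lim _ _ _ (D r ltac:(lra)))).
  specialize (MV (fun r Hr => Rlt_le _ _ (P r ltac:(red; lra)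
                                 ltac:(rewrite Rminus_0_r, Rabs_pos_eq; lra)))).
  assert (Q1 : Rabs (f a - f 0) < rho / 2)
    by (apply P1; [red; lra|rewrite Rminus_0_r, Rabs_pos_eq; lra]).
  assert (Q2 : Rabs (a * f' 0) <= rho / 2).
  { rewrite Rabs_mult, (Rabs_pos_eq a) by lra.
    apply Rle_trans with (rho / (2 * c) * c); [apply Rmult_le_compat; try lra; unfold c; lra|].
    right. field. unfold c; lra. }
  replace (f s - f 0 - s * f' 0)
    with ((f s - f a - (s - a) * f' 0) + (f a - f 0) - a * f' 0) by ring.
  eapply Rle_trans; [apply Rabs_triang|]. rewrite Rabs_Ropp.
  eapply Rle_trans; [apply Rplus_le_compat_r, Rabs_triang|].
  assert (0 <= eps * a) by (apply Rmult_le_pos; lra).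
  assert (eps * (s - a) = eps * s - eps * a) by ring. rewrite (Rabs_pos_eq s) by lra. lra.
Qed.

Lemma rcont_continuous (c : R -> R) t : rcont_at whole_line c t -> continuous c t.
Proof.
  intro C. apply continuity_pt_filterlim.
  intros eps He. destruct (C eps He) as [eta [Heta P]]. exists eta; split; auto.
  intros x [_ Hx]. apply P; [exact I|exact Hx].
Qed.

Lemma exists_primitive_pos (c : R -> R) :
  (forall r, r > 0 -> rcont_at whole_line c r) ->
  exists F : R -> R, forall r, r > 0 -> derivable_pt_lim F r (c r).
Proof.
  intros C. exists (RInt c 1). intros r Hr. apply is_derive_Reals.
  apply (is_derive_RInt c (RInt c 1) 1 r); [|apply rcont_continuous, C; auto].
  assert (Hp : 0 < r / 2) by lra.
  exists (mkposreal (r / 2) Hp). intros y Hy. change (Rabs (y - r) < r / 2) in Hy.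
  apply Rabs_def2 in Hy.
  apply (RInt_correct c 1 y), ex_RInt_continuous. intros z [Hz _].
  apply rcont_continuous, C. assert (0 < Rmin 1 y) by (apply Rmin_pos; lra). lra.
Qed.

Section WeakEnergy.
Variables (H : Hilbert) (DB : H -> Prop) (B : H -> H) (delta : R) (g u w : R -> H).
Hypothesis delta_pos : 0 < delta.
Hypothesis u_dom : forall t, t > 0 -> DB (u t).
Hypothesis u_deriv : forall t, t > 0 -> hderiv_at H whole_line u (w t) t.
Hypothesis w_cont : forall t, t > 0 -> hcont_at H whole_line w t.
Hypothesis Bu_cont : forall t, t > 0 -> hcont_at H whole_line (fun r => B (u r)) t.
Hypothesis g_cont : forall t, t > 0 -> hcont_at H whole_line g t.
Hypothesis w_weak_deriv : forall v, DB v -> forall t, t > 0 ->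
  rderiv_at whole_line (fun r => inner H (w r) v)
    (inner H (g t) v - 2 * delta * inner H (w t) v - inner H (B (u t)) (B v)) t.

Definition half_energy (x : R) : R :=
  (inner H (w x) (w x) + inner H (B (u x)) (B (u x))) / 2.

Definition half_energy_deriv (x : R) : R :=
  inner H (g x) (w x) - 2 * delta * inner H (w x) (w x).

(* In [regularized_energy h F], [w] is paired with the central difference quotient of [u]
   and [|B u|^2 - |w|^2] is replaced by its Steklov average over [[x - h, x]]; [F] stands
   for a primitive of [steklov_integrand h]. *)
Definition steklov_integrand (h r : R) : R :=
  inner H (B (u r)) (B (u (r + h))) - inner H (w r) (w (r + h)).

Definition central_difference (h r : R) : H := hsub H (u (r + h)) (u (r - h)).

Definition regularized_energy (h : R) (F : R -> R) (x : R) : R :=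
  inner H (w x) (central_difference h x) / (2 * h) + (F x - F (x - h)) / (2 * h).

Definition regularized_energy_deriv (h r : R) : R :=
  (inner H (g r) (central_difference h r)
   - 2 * delta * inner H (w r) (central_difference h r)) / (2 * h).

Lemma steklov_integrand_cont h : h > 0 ->
  forall r, r > 0 -> rcont_at whole_line (steklov_integrand h) r.
Proof.
  intros Hh r Hr. unfold steklov_integrand.
  apply rcont_minus; apply hcont_inner; auto.
  - apply (hcont_shift H (fun r => B (u r))). apply Bu_cont. lra.
  - apply hcont_shift. apply w_cont. lra.
Qed.

(* The [B]-terms produced by the weak equation cancel against the derivative of the
   Steklov average. *)
Lemma regularized_energy_has_deriv h F : h > 0 ->
  (forall r, r > 0 -> derivable_pt_lim F r (steklov_integrand h r)) ->
  forall r, r > h ->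
  derivable_pt_lim (regularized_energy h F) r (regularized_energy_deriv h r).
Proof.
  intros Hh HF r Hr.
  pose proof (rderiv_inner_weak H whole_line w (fun q => u (q + h)) _ (w (r + h)) r
    (w_weak_deriv (u (r + h)) (u_dom (r + h) ltac:(lra)) r ltac:(lra)) (w_cont r ltac:(lra))
    (hderiv_shift H u (w (r + h)) r h (u_deriv (r + h) ltac:(lra)))) as D1.
  pose proof (rderiv_inner_weak H whole_line w (fun q => u (q + - h)) _ (w (r + - h)) r
    (w_weak_deriv (u (r + - h)) (u_dom (r + - h) ltac:(lra)) r ltac:(lra)) (w_cont r ltac:(lra))
    (hderiv_shift H u (w (r + - h)) r (- h) (u_deriv (r + - h) ltac:(lra)))) as D2.
  pose proof (derivable_pt_lim_eps F r _ (HF r ltac:(lra))) as D3.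
  pose proof (rderiv_shift F _ r (- h) (derivable_pt_lim_eps F _ _ (HF (r + - h) ltac:(lra))))
    as D4.
  pose proof (rderiv_scal _ (/ (2 * h)) _ _ r
    (rderiv_plus _ _ _ _ _ r (rderiv_plus _ _ _ _ _ r D1 (rderiv_scal _ (-1) _ _ r D2))
                              (rderiv_plus _ _ _ _ _ r D3 (rderiv_scal _ (-1) _ _ r D4)))) as D.
  apply rderiv_derivable_pt_lim.
  replace (regularized_energy_deriv h r) with
    (/ (2 * h) * (inner H (g r) (u (r + h)) - 2 * delta * inner H (w r) (u (r + h))
       - inner H (B (u r)) (B (u (r + h))) + inner H (w r) (w (r + h))
       + -1 * (inner H (g r) (u (r + - h)) - 2 * delta * inner H (w r) (u (r + - h))
               - inner H (B (u r)) (B (u (r + - h))) + inner H (w r) (w (r + - h)))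
       + (steklov_integrand h r + -1 * steklov_integrand h (r + - h)))).
  - revert D. apply rderiv_ext; [|exact I].
    intros s _. unfold regularized_energy, central_difference.
    rewrite inner_subr. unfold Rminus. field. lra.
  - unfold regularized_energy_deriv, central_difference, steklov_integrand.
    rewrite !inner_subr. unfold Rminus. replace (r + - h + h) with r by ring.
    rewrite (inner_sym H (B (u (r + - h))) (B (u r))), (inner_sym H (w (r + - h)) (w r)).
    field. lra.
Qed.

Lemma central_difference_close x th : x > 0 -> th > 0 ->
  exists e, 0 < e <= x /\ forall h r, 0 < h -> Rabs (r - x) + h < e ->
    hnorm H (hsub H (central_difference h r) (hscal H (2 * h) (w x))) <= th * (2 * h).
Proof.
  intros Hx Hth. destruct (w_cont x Hx th Hth) as [e0 [He0 P]].
  exists (Rmin e0 x). split; [split; [apply Rmin_pos; lra|apply Rmin_r]|].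
  intros h r Hh Hr.
  assert (Hq : forall q, Rmin (r - h) (r + h) <= q <= Rmax (r - h) (r + h) ->
                         Rabs (q - x) < Rmin e0 x).
  { intros q Hq. rewrite Rmin_left, Rmax_right in Hq by lra.
    pose proof (Rabs_sub_le_near q r h x Hq). lra. }
  pose proof (hmvt_deriv_bound H u w (r - h) (r + h) (w x) th) as MV.
  replace (r + h - (r - h)) with (2 * h) in MV by ring.
  rewrite Rabs_pos_eq in MV by lra. apply MV.
  - intros q Hrq. apply u_deriv. specialize (Hq q Hrq).
    apply Rmin_Rgt in Hq as [_ Hq]. apply Rabs_def2 in Hq. lra.
  - intros q Hrq. left. apply P; [exact I|].
    specialize (Hq q Hrq). apply Rmin_Rgt in Hq as [Hq _]. exact Hq.
Qed.

Lemma steklov_integrand_close x th : x > 0 -> 0 < th <= 1 ->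
  exists e, 0 < e <= x /\ forall h r, 0 < h -> Rabs (r - x) + h < e ->
    Rabs (steklov_integrand h r - (inner H (B (u x)) (B (u x)) - inner H (w x) (w x)))
    <= th * (2 * hnorm H (B (u x)) + 2 * hnorm H (w x) + 2).
Proof.
  intros Hx Hth.
  destruct (eps_near_and _ _ _ _ (Bu_cont x Hx) (w_cont x Hx) th ltac:(lra)) as [e0 [He0 P]].
  exists (Rmin e0 x). split; [split; [apply Rmin_pos; lra|apply Rmin_r]|].
  intros h r Hh Hr. pose proof (Rmin_l e0 x).
  assert (Hr0 : Rabs (r - x) < e0) by lra.
  assert (Hrh : Rabs (r + h - x) < e0)
    by (pose proof (Rabs_sub_le_near (r + h) r h x ltac:(lra)); lra).
  destruct (P r I Hr0) as [P1 P2]. destruct (P (r + h) I Hrh) as [P3 Hpow].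
  pose proof (inner_close H _ _ _ _ th ltac:(lra) (Rlt_le _ _ P1) (Rlt_le _ _ P3)) as C1.
  pose proof (inner_close H _ _ _ _ th ltac:(lra) (Rlt_le _ _ P2) (Rlt_le _ _ Hpow)) as C2.
  unfold steklov_integrand.
  replace (inner H (B (u r)) (B (u (r + h))) - inner H (w r) (w (r + h))
           - (inner H (B (u x)) (B (u x)) - inner H (w x) (w x)))
    with ((inner H (B (u r)) (B (u (r + h))) - inner H (B (u x)) (B (u x)))
          - (inner H (w r) (w (r + h)) - inner H (w x) (w x))) by ring.
  eapply Rle_trans; [apply Rabs_triang|]. rewrite Rabs_Ropp. lra.
Qed.

Lemma regularized_energy_close x rho : x > 0 -> rho > 0 ->
  exists h1, h1 > 0 /\ forall h F, 0 < h < h1 -> h < x / 2 ->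
    (forall r, r > 0 -> derivable_pt_lim F r (steklov_integrand h r)) ->
    Rabs (regularized_energy h F x - half_energy x) <= rho.
Proof.
  intros Hx Hrho.
  set (a := hnorm H (w x)). set (b := hnorm H (B (u x))).
  assert (0 <= a) by apply hnorm_ge0. assert (0 <= b) by apply hnorm_ge0.
  set (th := Rmin 1 (rho / (2 * a + b + 1))).
  assert (Hth : 0 < th <= 1)
    by (split; [apply Rmin_pos; [lra|apply Rdiv_lt_0_compat; lra]|apply Rmin_l]).
  assert (HthK : th * (2 * a + b + 1) <= rho).
  { apply Rle_trans with (rho / (2 * a + b + 1) * (2 * a + b + 1));
      [apply Rmult_le_compat_r; [lra|apply Rmin_r]|].
    right. field. lra. }
  destruct (central_difference_close x th Hx ltac:(lra)) as [e1 [He1 P1]].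
  destruct (steklov_integrand_close x th Hx Hth) as [e2 [He2 P2]].
  exists (Rmin e1 (e2 / 2)). split; [apply Rmin_pos; lra|].
  intros h F [Hh Hh1] Hhx HF. apply Rmin_Rgt in Hh1 as [Hhe1 Hhe2].
  set (K := inner H (B (u x)) (B (u x)) - inner H (w x) (w x)).
  assert (BA : Rabs (inner H (w x) (central_difference h x) / (2 * h) - inner H (w x) (w x))
               <= a * th).
  { replace (inner H (w x) (central_difference h x) / (2 * h) - inner H (w x) (w x))
      with (inner H (w x) (hsub H (central_difference h x) (hscal H (2 * h) (w x))) / (2 * h))
      by (rewrite inner_subr, inner_scalr; field; lra).
    apply inner_quotient_le; [lra| |apply Rle_refl].
    apply P1; [lra|]. rewrite Rminus_diag, Rabs_R0. lra. }
  assert (BB : Rabs ((F x - F (x - h)) / h - K) <= th * (2 * b + 2 * a + 2)).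
  { apply (difference_quotient_close F (steklov_integrand h)); [lra|intros r Hr; apply HF; lra|].
    intros r Hr. apply P2; [lra|].
    pose proof (Rabs_sub_le_near r x h x ltac:(lra)). rewrite Rminus_diag, Rabs_R0 in *. lra. }
  replace (regularized_energy h F x - half_energy x) with
    ((inner H (w x) (central_difference h x) / (2 * h) - inner H (w x) (w x)) +
     ((F x - F (x - h)) / h - K) / 2)
    by (unfold regularized_energy, half_energy, K; field; lra).
  eapply Rle_trans; [apply Rabs_triang|].
  replace (Rabs (((F x - F (x - h)) / h - K) / 2)) with (Rabs ((F x - F (x - h)) / h - K) / 2)
    by (unfold Rdiv at 3; rewrite Rabs_mult, (Rabs_pos_eq (/ 2)) by lra; reflexivity).
  nra.
Qed.

Lemma regularized_energy_deriv_sub h r T : h > 0 ->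
  regularized_energy_deriv h r - half_energy_deriv T =
  inner H (g r) (hsub H (central_difference h r) (hscal H (2 * h) (w T))) / (2 * h)
  + - (2 * delta) * (inner H (w r) (hsub H (central_difference h r) (hscal H (2 * h) (w T)))
                     / (2 * h))
  + inner H (hsub H (g r) (g T)) (w T) + - (2 * delta) * inner H (hsub H (w r) (w T)) (w T).
Proof.
  intros Hh. unfold regularized_energy_deriv, half_energy_deriv.
  rewrite !inner_subr, !inner_scalr, !inner_subl. field. lra.
Qed.

Lemma regularized_energy_deriv_close T eps : T > 0 -> eps > 0 ->
  exists e, 0 < e <= T /\ forall h r, 0 < h -> Rabs (r - T) + h < e ->
    Rabs (regularized_energy_deriv h r - half_energy_deriv T) <= eps.
Proof.
  intros HT Heps.
  set (a := hnorm H (w T)). set (G := hnorm H (g T)).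
  assert (0 <= a) by apply hnorm_ge0. assert (0 <= G) by apply hnorm_ge0.
  set (K := (G + 1) + 2 * delta * (a + 1) + a + 2 * delta * a).
  assert (HK : K > 0) by (unfold K; nra).
  set (th := Rmin 1 (eps / K)).
  assert (Hth : 0 < th <= 1)
    by (split; [apply Rmin_pos; [lra|apply Rdiv_lt_0_compat; lra]|apply Rmin_l]).
  assert (HthK : th * K <= eps).
  { apply Rle_trans with (eps / K * K); [apply Rmult_le_compat_r; [lra|apply Rmin_r]|].
    right. field. lra. }
  destruct (central_difference_close T th HT ltac:(lra)) as [e1 [He1 P1]].
  destruct (eps_near_and _ _ _ _ (g_cont T HT) (w_cont T HT) th ltac:(lra))
    as [e2 [He2 P2]].
  exists (Rmin e1 e2). split; [split; [apply Rmin_pos; lra|]|].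
  { eapply Rle_trans; [apply Rmin_l|lra]. }
  intros h r Hh Hr. pose proof (Rmin_l e1 e2). pose proof (Rmin_r e1 e2).
  destruct (P2 r I ltac:(lra)) as [Pg Pw].
  set (D := hsub H (central_difference h r) (hscal H (2 * h) (w T))).
  assert (HD : hnorm H D <= th * (2 * h)) by (apply P1; lra).
  assert (Ngr : hnorm H (g r) <= G + 1)
    by (pose proof (hnorm_le_add_sub H (g r) (g T)); unfold G; lra).
  assert (Nwr : hnorm H (w r) <= a + 1)
    by (pose proof (hnorm_le_add_sub H (w r) (w T)); unfold a; lra).
  pose proof (inner_quotient_le H (g r) D h th (G + 1) Hh HD Ngr) as B1.
  pose proof (inner_quotient_le H (w r) D h th (a + 1) Hh HD Nwr) as B2.
  assert (B3 : Rabs (inner H (hsub H (g r) (g T)) (w T)) <= th * a).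
  { eapply Rle_trans; [apply cauchy_schwarz|]. apply Rmult_le_compat_r; lra. }
  assert (B4 : Rabs (inner H (hsub H (w r) (w T)) (w T)) <= th * a).
  { eapply Rle_trans; [apply cauchy_schwarz|]. apply Rmult_le_compat_r; lra. }
  rewrite (regularized_energy_deriv_sub h r T Hh). fold D.
  eapply Rle_trans; [apply Rabs_triang|].
  eapply Rle_trans; [apply Rplus_le_compat_r, Rabs_triang|].
  eapply Rle_trans; [apply Rplus_le_compat_r, Rplus_le_compat_r, Rabs_triang|].
  rewrite !Rabs_mult, Rabs_Ropp, (Rabs_pos_eq (2 * delta)) by lra.
  unfold K in HthK. nra.
Qed.

Lemma half_energy_has_deriv T : T > 0 ->
  rderiv_at whole_line half_energy (half_energy_deriv T) T.
Proof.
  intros HT. apply rderiv_of_approximations. intros eps Heps.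
  destruct (regularized_energy_deriv_close T eps HT Heps) as [e [He Pe]].
  exists (e / 2). split; [lra|]. intros s _ Hs rho Hrho. apply Rabs_def2 in Hs as Hs'.
  destruct (regularized_energy_close T rho HT Hrho) as [h1 [Hh1 V1]].
  destruct (regularized_energy_close s rho ltac:(lra) Hrho) as [h2 [Hh2 V2]].
  set (m := Rmin (Rmin h1 h2) (Rmin (e / 2) (T / 4))).
  assert (Hm : 0 < m) by (unfold m; repeat apply Rmin_pos; lra).
  assert (Hm1 : m <= h1 /\ m <= h2 /\ m <= e / 2 /\ m <= T / 4).
  { unfold m. repeat split;
      [apply (Rle_trans _ _ _ (Rmin_l _ _)), Rmin_l | apply (Rle_trans _ _ _ (Rmin_l _ _)), Rmin_r
      |apply (Rle_trans _ _ _ (Rmin_r _ _)), Rmin_l | apply (Rle_trans _ _ _ (Rmin_r _ _)), Rmin_r]. }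
  set (h := m / 2).
  destruct (exists_primitive_pos (steklov_integrand h)
              (steklov_integrand_cont h ltac:(unfold h; lra))) as [F HF].
  exists (regularized_energy h F), (regularized_energy_deriv h).
  split; [|split].
  - intros r Hr.
    assert (Hr' : T - Rabs (s - T) <= r <= T + Rabs (s - T)).
    { pose proof (Rle_abs (s - T)). pose proof (Rle_abs (- (s - T))). rewrite Rabs_Ropp in *.
      unfold Rmin, Rmax in Hr. destruct (Rle_dec T s); lra. }
    split.
    + apply regularized_energy_has_deriv; auto; unfold h; lra.
    + apply Pe; [unfold h; lra|].
      pose proof (Rabs_sub_le_near r T (Rabs (s - T)) T Hr').
      rewrite Rminus_diag, Rabs_R0 in *. unfold h; lra.
  - apply V1; auto; unfold h; lra.
  - apply V2; auto; unfold h; lra.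
Qed.

End WeakEnergy.

Section OrthogonalProjection.
Variables (H : Hilbert) (K : H -> Prop) (Q : H -> H).
Hypothesis HQ : is_orth_proj H (orth H K) Q.

Lemma orth_proj_inner x m : orth H K m -> inner H (Q x) m = inner H x m.
Proof. intros Hm. pose proof (proj2 (HQ x) m Hm). rewrite inner_subl in *. lra. Qed.

Lemma orth_proj_inner_self x : inner H x (Q x) = inner H (Q x) (Q x).
Proof. symmetry. apply orth_proj_inner, HQ. Qed.

Lemma orth_proj_sqr_le x : inner H (Q x) (Q x) <= inner H x x.
Proof.
  pose proof (inner_ge0 H (hsub H x (Q x))). pose proof (orth_proj_inner_self x).
  rewrite inner_subl, !inner_subr, (inner_sym H (Q x) x) in *. lra.
Qed.

Lemma orth_proj_comb_le a b c e :
  hnorm H (hsub H (hsub H (Q a) (Q b)) (hscal H c (Q e)))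
  <= hnorm H (hsub H (hsub H a b) (hscal H c e)).
Proof.
  set (z := hsub H (hsub H a b) (hscal H c e)).
  set (X := hsub H (hsub H (Q a) (Q b)) (hscal H c (Q e))).
  assert (MX : orth H K X).
  { intros k Hk. unfold X. rewrite inner_sym, inner_comb, !(inner_sym H _ k).
    rewrite (proj1 (HQ a) k Hk), (proj1 (HQ b) k Hk), (proj1 (HQ e) k Hk). ring. }
  assert (EX : forall m, orth H K m -> inner H X m = inner H (Q z) m).
  { intros m Hm. unfold X, z. rewrite !orth_proj_inner, !inner_comb, !orth_proj_inner by auto.
    reflexivity. }
  assert (inner H X X = inner H (Q z) (Q z)).
  { rewrite (EX X MX), inner_sym, (EX (Q z) (proj1 (HQ z))). reflexivity. }
  apply hnorm_le_of_sqr; [apply hnorm_ge0|].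
  rewrite hnorm_mul_self. pose proof (orth_proj_sqr_le z). lra.
Qed.

Lemma hderiv_orth_proj S (u : R -> H) l t :
  hderiv_at H S u l t -> hderiv_at H S (fun r => Q (u r)) (Q l) t.
Proof.
  apply eps_near_impl. intros eps s _. apply Rle_trans, orth_proj_comb_le.
Qed.

Lemma hcont_orth_proj S (u : R -> H) t :
  hcont_at H S u t -> hcont_at H S (fun r => Q (u r)) t.
Proof.
  apply eps_near_impl. intros eps s _. apply Rle_lt_trans.
  rewrite <- (hnorm_sub_scal0 H (hsub H (Q (u s)) (Q (u t))) (Q (u t))),
          <- (hnorm_sub_scal0 H (hsub H (u s) (u t)) (u t)).
  apply orth_proj_comb_le.
Qed.

End OrthogonalProjection.

(* [x - Q x] lies in [ker A]: it is orthogonal to the range of [A], which is contained in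
   [(ker A)^perp], and [A] is self-adjoint. *)
Lemma sqrt_op_orth_proj (H : Hilbert) DA A DB B Q :
  sa_nonneg_op H DA A -> is_sqrt_op H DA A DB B ->
  is_orth_proj H (orth H (kerA H DA A)) Q ->
  forall x, DB x -> DB (Q x) /\ B (Q x) = B x.
Proof.
  intros [_ [_ [SA _]]] [[[[_ [DBadd DBscal]] [Badd Bscal]] [_ [SAB _]]] [DAB AB]] HQ x Hx.
  set (z := hsub H x (Q x)).
  assert (range_orth : forall y, DA y -> orth H (kerA H DA A) (A y)).
  { intros y Hy k [Hk Ak]. rewrite inner_sym.
    rewrite (proj2 (SA k (A k)) (conj Hk eq_refl) y Hy), Ak. apply inner_0r. }
  assert (Hz : DA z /\ h0 H = A z).
  { apply (proj1 (SA z (h0 H))). intros y Hy. rewrite inner_0r, inner_sym.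
    apply (proj2 (HQ x)), range_orth, Hy. }
  destruct Hz as [DAz Az]. destruct (proj1 (DAB z) DAz) as [DBz DBBz].
  assert (Bz : B z = h0 H).
  { apply inner_eq0.
    rewrite (proj2 (SAB (B z) (B (B z))) (conj DBBz eq_refl) z DBz), <- AB, <- Az by auto.
    apply inner_0r. }
  assert (EQ : Q x = hadd H x (hscal H (-1) z))
    by (rewrite <- hopp_scal; symmetry; apply hsub_hsub).
  rewrite EQ. split; [apply DBadd; auto|].
  rewrite Badd, Bscal, Bz, hscal_h0, hadd0 by auto. reflexivity.
Qed.

Lemma mu_const_spec nu delta : 0 < nu -> 0 < delta ->
  0 < mu_const nu delta /\ mu_const nu delta <= 1/2 /\ mu_const nu delta <= nu / 2 /\
  mu_const nu delta <= delta / 2 /\ 5 * mu_const nu delta * delta <= nu.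
Proof.
  intros Hn Hd. unfold mu_const.
  set (m1 := Rmin (1/2) (nu / 2)). set (m2 := Rmin (delta / 2) (nu / (5 * delta))).
  assert (Hq : 0 < nu / (5 * delta)) by (apply Rdiv_lt_0_compat; lra).
  assert (Hpos : 0 < Rmin m1 m2) by (unfold m1, m2; repeat apply Rmin_pos; lra).
  assert (Rmin m1 m2 <= m1) by apply Rmin_l. assert (Rmin m1 m2 <= m2) by apply Rmin_r.
  assert (m1 <= 1/2) by apply Rmin_l. assert (m1 <= nu / 2) by apply Rmin_r.
  assert (m2 <= delta / 2) by apply Rmin_l.
  assert (Hm2 : Rmin m1 m2 <= nu / (5 * delta)) by (apply Rle_trans with m2; [auto|apply Rmin_r]).
  apply Rmult_le_compat_r with (r := 5 * delta) in Hm2; [|lra].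
  replace (nu / (5 * delta) * (5 * delta)) with nu in Hm2 by (field; lra).
  repeat split; lra.
Qed.

Lemma young x y e : 0 < e -> 2 * x * y <= e * (x * x) + y * y / e.
Proof.
  intros He. assert (0 <= (e * x - y) * (e * x - y) / e)
    by (apply Rle_mult_inv_pos; [apply Rle_0_sqr|lra]).
  replace ((e * x - y) * (e * x - y) / e) with (e * (x * x) - 2 * x * y + y * y / e) in *
    by (field; lra).
  lra.
Qed.

Section EnergyInequalities.
Variables mu nu delta : R.
Hypotheses (delta_pos : 0 < delta) (nu_pos : 0 < nu) (mu_pos : 0 < mu)
  (mu_le_half : mu <= 1/2) (mu_le_nu : mu <= nu / 2) (mu_le_delta : mu <= delta / 2)
  (mu_delta_le_nu : 5 * mu * delta <= nu).

(* Here [a = |u'|], [b = |A^(1/2) u|], [q = |Q u|] and [p = <u', Q u>]. *)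
Lemma perturbed_energy_equiv a b q p :
  0 <= a -> 0 <= b -> 0 <= q -> nu * (q * q) <= b * b -> Rabs p <= a * q ->
  1/2 * (a * a + b * b) <= a * a + b * b + 2 * mu * p /\
  a * a + b * b + 2 * mu * p <= 2 * (a * a + b * b).
Proof.
  intros Ha Hb Hq Hqb Hp. apply Rabs_le_inv in Hp.
  assert (4 * mu * mu <= nu) by nra.
  assert (4 * mu * mu * (q * q) <= b * b) by nra.
  assert (4 * mu * a * q <= a * a + 4 * mu * mu * (q * q))
    by (pose proof (Rle_0_sqr (a - 2 * mu * q)); unfold Rsqr in *; lra).
  split; nra.
Qed.

Lemma damping_constant_bound :
  (4 * mu * delta + mu * mu) * (4 * mu * delta + mu * mu) / (7 * delta) + mu * mu * delta
  <= 3 / 2 * mu * nu.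
Proof.
  replace ((4 * mu * delta + mu * mu) * (4 * mu * delta + mu * mu) / (7 * delta))
    with (mu * (mu * (16 * delta + 8 * mu) + mu * mu * (mu / delta)) / 7) by (field; lra).
  assert (mu / delta <= 1 / 2).
  { apply Rmult_le_reg_r with delta; [lra|].
    unfold Rdiv. rewrite Rmult_assoc, Rinv_l; lra. }
  assert (0 <= mu / delta) by (apply Rle_mult_inv_pos; lra).
  assert (mu * (16 * delta) <= 16 * nu / 5) by nra.
  assert (mu * mu <= nu / 4) by nra.
  assert (mu * mu * (mu / delta) <= nu / 8) by nra.
  assert (mu * (mu * (16 * delta + 8 * mu) + mu * mu * (mu / delta))
          <= mu * (16 * nu / 5 + 2 * nu + nu / 8)) by nra.
  assert (mu * mu * delta <= mu * nu / 5) by nra.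
  nra.
Qed.

(* Additionally [G = |g|], [gw = <g, u'>], [gq = <g, Q u>] and [wQw = <u', Q u'>]. *)
Lemma perturbed_energy_deriv_bound a b q G gw gq p wQw :
  0 <= a -> 0 <= b -> 0 <= q -> 0 <= G -> nu * (q * q) <= b * b ->
  Rabs gw <= G * a -> Rabs gq <= G * q -> Rabs p <= a * q -> 0 <= wQw <= a * a ->
  2 * gw - 4 * delta * (a * a) + 2 * mu * (gq - 2 * delta * p - b * b + wQw)
  <= - (mu / 2) * (a * a + b * b + 2 * mu * p) + 2 / delta * (G * G).
Proof.
  intros Ha Hb Hq HG Hqb Hgw Hgq Hp HwQw.
  apply Rabs_le_inv in Hgw. apply Rabs_le_inv in Hgq. apply Rabs_le_inv in Hp.
  set (X := G * G / delta).
  assert (Y1 : 2 * gw <= delta * (a * a) + X).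
  { pose proof (young a G delta delta_pos). unfold X. nra. }
  assert (Y2 : 2 * mu * gq <= mu * mu * delta * (q * q) + X).
  { pose proof (young (mu * q) G delta delta_pos).
    assert (mu * gq <= mu * (G * q)) by nra. unfold X. nra. }
  set (c := 4 * mu * delta + mu * mu).
  assert (Y3 : c * (a * q) <= 7 / 4 * delta * (a * a) + c * c / (7 * delta) * (q * q)).
  { pose proof (young a (c / 2 * q) (7 / 4 * delta) ltac:(lra)) as Y.
    replace (c / 2 * q * (c / 2 * q) / (7 / 4 * delta)) with (c * c / (7 * delta) * (q * q))
      in Y by (field; lra).
    lra. }
  assert (Hpc : - 4 * mu * delta * p + mu * mu * p <= c * (a * q)).
  { assert (mu * delta * (- p) <= mu * delta * (a * q)) by (apply Rmult_le_compat_l; nra).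
    assert (mu * mu * p <= mu * mu * (a * q)) by (apply Rmult_le_compat_l; nra).
    unfold c. lra. }
  assert (Hq2 : (c * c / (7 * delta) + mu * mu * delta) * (q * q) <= 3 / 2 * mu * (b * b)).
  { apply Rle_trans with (3 / 2 * mu * nu * (q * q));
      [apply Rmult_le_compat_r; [nra|apply damping_constant_bound]|nra]. }
  replace (2 / delta * (G * G)) with (2 * X) by (unfold X; field; lra).
  assert (mu * wQw <= mu * (a * a)) by (apply Rmult_le_compat_l; lra).
  assert (mu * (a * a) <= delta / 2 * (a * a)) by (apply Rmult_le_compat_r; nra).
  assert (0 <= mu * (b * b)) by nra.
  nra.
Qed.

End EnergyInequalities.

Lemma Rpower_pos x y : 0 < Rpower x y.
Proof. apply exp_pos. Qed.

Lemma Rpower_2_plus n d : 0 < n -> Rpower n (2 + d) = n * n * (Rpower n (d / 2) * Rpower n (d / 2)).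
Proof.
  intros Hn. replace (2 + d) with (1 + 1 + (d / 2 + d / 2)) by field.
  rewrite !Rpower_plus, Rpower_1 by auto. ring.
Qed.

Section NormPower.
Variables (H : Hilbert) (S : R -> Prop) (u w : R -> H).
Hypothesis u_ne0 : forall t, S t -> u t <> h0 H.
Hypothesis u_deriv : forall t, S t -> hderiv_at H S u (w t) t.

Lemma norm_power_rderiv c t : S t ->
  rderiv_at S (fun r => Rpower (hnorm H (u r)) c)
    (c * Rpower (hnorm H (u t)) (c - 2) * inner H (u t) (w t)) t.
Proof.
  intros St. pose proof (hnorm_pos H (u t) (u_ne0 t St)) as Hn.
  assert (Hi : 0 < inner H (u t) (u t)) by (rewrite <- hnorm_mul_self; nra).
  pose proof (rderiv_inner_weak H S u u _ (w t) t
    (hderiv_inner_const H S u (w t) t (u t) (u_deriv t St))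
    (hderiv_cont H S u (w t) t (u_deriv t St)) (u_deriv t St)) as Dsq.
  pose proof (rderiv_comp S sqrt _ _ _ t Dsq (derivable_pt_lim_sqrt _ Hi)) as Dn.
  pose proof (rderiv_comp S (fun y => Rpower y c) _ _ _ t Dn
    (derivable_pt_lim_power _ c Hn)) as D.
  eapply rderiv_eq; [|exact D]. fold (hnorm H (u t)). rewrite (inner_sym H (w t)).
  replace (c - 1) with (c - 2 + 1) by ring. rewrite Rpower_plus, Rpower_1 by auto.
  field. lra.
Qed.

Lemma norm_power_rcont c t : S t -> rcont_at S (fun r => Rpower (hnorm H (u r)) c) t.
Proof. intros St. eapply rderiv_cont, norm_power_rderiv, St. Qed.

End NormPower.

(* [n = |u|], [k = |u|^(d/2)], [a = |u'|], [p = <u, u'>]. *)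
Lemma quotient_deriv_bound mu d n k a p E Eh Eh' gg :
  0 < n -> 0 < k -> 0 <= d -> 0 <= a -> Rabs p <= n * a -> a * a <= E -> 0 <= Eh ->
  Eh' <= - (mu / 2) * Eh + gg ->
  Eh' / (n * n * (k * k)) + Eh * (- (2 + d) / (n * n * n * n * (k * k)) * p)
  <= - (mu / 2) * (Eh / (n * n * (k * k))) + gg / (n * n * (k * k))
     + (2 + d) * k * sqrt (E / (n * n * (k * k))) * (Eh / (n * n * (k * k))).
Proof.
  intros Hn Hk Hd Ha Hp HaE HEh HEh'. apply Rabs_le_inv in Hp.
  assert (Hnk : 0 < n * n * (k * k)) by (apply Rmult_lt_0_compat; nra).
  assert (Hsq : sqrt (E / (n * n * (k * k))) = sqrt E / (n * k)).
  { replace (n * n * (k * k)) with ((n * k) * (n * k)) by ring.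
    rewrite sqrt_div_alt, sqrt_square by nra. reflexivity. }
  assert (HaE' : a <= sqrt E)
    by (rewrite <- (sqrt_square a) by auto; apply sqrt_le_1_alt; lra).
  rewrite Hsq.
  assert (Eh' / (n * n * (k * k)) <= (- (mu / 2) * Eh + gg) / (n * n * (k * k)))
    by (apply Rmult_le_compat_r; [left; apply Rinv_0_lt_compat|]; lra).
  replace (Eh * (- (2 + d) / (n * n * n * n * (k * k)) * p))
    with ((2 + d) * (Eh / (n * n * (k * k))) * (- p / (n * n))) by (field; lra).
  replace ((2 + d) * k * (sqrt E / (n * k)) * (Eh / (n * n * (k * k))))
    with ((2 + d) * (Eh / (n * n * (k * k))) * (sqrt E / n)) by (field; lra).
  assert (- p / (n * n) <= sqrt E / n).
  { apply Rmult_le_reg_r with (n * n); [nra|].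
    replace (- p / (n * n) * (n * n)) with (- p) by (field; lra).
    replace (sqrt E / n * (n * n)) with (sqrt E * n) by (field; lra). nra. }
  assert (0 <= (2 + d) * (Eh / (n * n * (k * k))))
    by (apply Rmult_le_pos; [lra|apply Rle_mult_inv_pos; lra]).
  assert ((2 + d) * (Eh / (n * n * (k * k))) * (- p / (n * n))
          <= (2 + d) * (Eh / (n * n * (k * k))) * (sqrt E / n))
    by (apply Rmult_le_compat_l; auto).
  replace ((- (mu / 2) * Eh + gg) / (n * n * (k * k)))
    with (- (mu / 2) * (Eh / (n * n * (k * k))) + gg / (n * n * (k * k))) in * by (field; lra).
  lra.
Qed.

Section NormalizedEnergy.
Variables (H : Hilbert) (S : R -> Prop) (u w : R -> H) (E Eh Eh' gg : R -> R) (mu d : R).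
Hypothesis d_ge0 : 0 <= d.
Hypothesis u_ne0 : forall t, S t -> u t <> h0 H.
Hypothesis u_deriv : forall t, S t -> hderiv_at H S u (w t) t.
Hypothesis w_cont : forall t, S t -> hcont_at H S w t.
Hypothesis Eh_deriv : forall t, S t -> rderiv_at S Eh (Eh' t) t.
Hypothesis Eh'_cont : forall t, S t -> rcont_at S Eh' t.
Hypothesis w_le_E : forall t, S t -> hnorm H (w t) ^ 2 <= E t.
Hypothesis Eh_equiv : forall t, S t -> 1/2 * E t <= Eh t /\ Eh t <= 2 * E t.
Hypothesis Eh_deriv_le : forall t, S t -> Eh' t <= - (mu / 2) * Eh t + gg t.

Definition normalized_deriv (t : R) : R :=
  Eh' t * Rpower (hnorm H (u t)) (- (2 + d))
  + Eh t * (- (2 + d) * Rpower (hnorm H (u t)) (- (2 + d) - 2) * inner H (u t) (w t)).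

Lemma normalized_equiv t : S t ->
  1/2 * (E t / Rpower (hnorm H (u t)) (2 + d)) <= Eh t / Rpower (hnorm H (u t)) (2 + d) /\
  Eh t / Rpower (hnorm H (u t)) (2 + d) <= 2 * (E t / Rpower (hnorm H (u t)) (2 + d)).
Proof.
  intros St. pose proof (Rpower_pos (hnorm H (u t)) (2 + d)). destruct (Eh_equiv t St).
  unfold Rdiv. rewrite <- !Rmult_assoc.
  split; apply Rmult_le_compat_r; try lra; left; apply Rinv_0_lt_compat; auto.
Qed.

Lemma normalized_rderiv t : S t ->
  rderiv_at S (fun r => Eh r / Rpower (hnorm H (u r)) (2 + d)) (normalized_deriv t) t.
Proof.
  intros St.
  apply (rderiv_ext S (fun r => Eh r * Rpower (hnorm H (u r)) (- (2 + d)))); auto.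
  - intros s _. rewrite Rpower_Ropp. reflexivity.
  - unfold normalized_deriv.
    apply (rderiv_mult S Eh (fun r => Rpower (hnorm H (u r)) (- (2 + d)))); auto.
    apply (norm_power_rderiv H S u w u_ne0 u_deriv _ _ St).
Qed.

Lemma normalized_deriv_cont t : S t -> rcont_at S normalized_deriv t.
Proof.
  intros St. pose proof (norm_power_rcont H S u w u_ne0 u_deriv) as Cpow.
  unfold normalized_deriv. apply rcont_plus.
  - apply rcont_mult; auto.
  - apply rcont_mult; [eapply rderiv_cont; eauto|].
    apply rcont_mult; [apply rcont_mult; [apply rcont_const|auto]|].
    apply hcont_inner; [eapply hderiv_cont; eauto|auto].
Qed.

Lemma normalized_deriv_le t : S t ->
  normalized_deriv t <= - (mu / 2) * (Eh t / Rpower (hnorm H (u t)) (2 + d))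
    + gg t / Rpower (hnorm H (u t)) (2 + d)
    + (2 + d) * Rpower (hnorm H (u t)) (d / 2)
        * sqrt (E t / Rpower (hnorm H (u t)) (2 + d))
        * (Eh t / Rpower (hnorm H (u t)) (2 + d)).
Proof.
  intros St. pose proof (hnorm_pos H (u t) (u_ne0 t St)) as Hn.
  set (n := hnorm H (u t)) in *. set (k := Rpower n (d / 2)).
  assert (Hpow : Rpower n (- (2 + d) - 2) = / (n * n * n * n * (k * k))).
  { replace (- (2 + d) - 2) with (- (2 + (2 + d))) by ring.
    rewrite Rpower_Ropp, Rpower_plus, Rpower_2_plus by auto.
    replace 2 with (1 + 1) at 1 by ring. rewrite Rpower_plus, Rpower_1 by auto.
    unfold k. f_equal. ring. }
  unfold normalized_deriv. fold n. rewrite Hpow, Rpower_Ropp, !Rpower_2_plus by auto. fold k.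
  pose proof (w_le_E t St). pose proof (Eh_equiv t St).
  pose proof (quotient_deriv_bound mu d n k (hnorm H (w t)) (inner H (u t) (w t))
                (E t) (Eh t) (Eh' t) (gg t) Hn (Rpower_pos n (d / 2)) d_ge0
                (hnorm_ge0 H (w t)) (cauchy_schwarz H (u t) (w t))) as B.
  unfold Rdiv in B |- *. apply B; [nra|lra|apply Eh_deriv_le, St].
Qed.

Lemma normalized_energy_estimates :
  (forall t, S t ->
     1/2 * (E t / Rpower (hnorm H (u t)) (2 + d)) <= Eh t / Rpower (hnorm H (u t)) (2 + d) /\
     Eh t / Rpower (hnorm H (u t)) (2 + d) <= 2 * (E t / Rpower (hnorm H (u t)) (2 + d))) /\
  exists Gh' : R -> R,
    C1_on S (fun t => Eh t / Rpower (hnorm H (u t)) (2 + d)) Gh' /\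
    (forall t, S t -> Gh' t <= - (mu / 2) * (Eh t / Rpower (hnorm H (u t)) (2 + d))
       + gg t / Rpower (hnorm H (u t)) (2 + d)
       + (2 + d) * Rpower (hnorm H (u t)) (d / 2)
           * sqrt (E t / Rpower (hnorm H (u t)) (2 + d))
           * (Eh t / Rpower (hnorm H (u t)) (2 + d))).
Proof.
  split; [exact normalized_equiv|].
  exists normalized_deriv. split; [split|].
  - exact normalized_rderiv.
  - exact normalized_deriv_cont.
  - exact normalized_deriv_le.
Qed.
End NormalizedEnergy.

Section DampedWave.
Variables (H : Hilbert) (K : H -> Prop) (DB : H -> Prop) (B Q : H -> H) (delta nu : R)
  (g u u' : R -> H).
Hypothesis delta_pos : 0 < delta.
Hypothesis nu_pos : 0 < nu.
Hypothesis Q_proj : is_orth_proj H (orth H K) Q.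
Hypothesis B_Q : forall x, DB x -> DB (Q x) /\ B (Q x) = B x.
Hypothesis poincare : forall x, DB x -> hnorm H (Q x) ^ 2 <= / nu * hnorm H (B x) ^ 2.
Hypothesis g_cont : hcont_on H half_line g.
Hypothesis u_dom : forall t, half_line t -> DB (u t).
Hypothesis Bu_cont : hcont_on H half_line (fun t => B (u t)).
Hypothesis u_deriv : hderiv_on H half_line u u'.
Hypothesis u'_cont : hcont_on H half_line u'.
Hypothesis u'_weak_deriv : forall v, DB v ->
  rderiv_on half_line (fun t => inner H (u' t) v)
    (fun t => inner H (g t) v - 2 * delta * inner H (u' t) v - inner H (B (u t)) (B v)).

Local Notation mu := (mu_const nu delta).
Local Notation E := (energy H B u u').
Local Notation Eh := (energy_hat H B Q mu u u').

Definition energy_deriv (t : R) : R :=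
  2 * inner H (g t) (u' t) - 4 * delta * inner H (u' t) (u' t).

Definition cross_term_deriv (t : R) : R :=
  inner H (g t) (Q (u t)) - 2 * delta * inner H (u' t) (Q (u t))
  - inner H (B (u t)) (B (u t)) + inner H (u' t) (Q (u' t)).

Definition energy_hat_deriv (t : R) : R := energy_deriv t + 2 * mu * cross_term_deriv t.

Lemma energy_eq t : E t = inner H (u' t) (u' t) + inner H (B (u t)) (B (u t)).
Proof. unfold energy. rewrite !hnorm_sq. reflexivity. Qed.

Lemma eps_near_interior P t : t > 0 -> eps_near half_line t P -> eps_near whole_line t P.
Proof. intros Ht. apply eps_near_local, neighbourhood_half_line, Ht. Qed.

Lemma energy_cont t : half_line t -> rcont_at half_line E t.
Proof.
  intros Ht. apply (eps_near_impl _ _ (fun eps s =>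
    Rabs (inner H (u' s) (u' s) + inner H (B (u s)) (B (u s))
          - (inner H (u' t) (u' t) + inner H (B (u t)) (B (u t)))) < eps)).
  - intros eps s _. rewrite !energy_eq. auto.
  - apply rcont_plus; apply hcont_inner;
      [exact (u'_cont t Ht)|exact (u'_cont t Ht)|exact (Bu_cont t Ht)|exact (Bu_cont t Ht)].
Qed.

Lemma energy_deriv_cont t : half_line t -> rcont_at half_line energy_deriv t.
Proof.
  intros Ht. unfold energy_deriv.
  apply rcont_minus; apply rcont_mult; try apply rcont_const;
    apply hcont_inner; first [exact (g_cont t Ht)|exact (u'_cont t Ht)].
Qed.

Lemma energy_rderiv_pos t : t > 0 -> rderiv_at whole_line E (energy_deriv t) t.
Proof.
  intros Ht.
  apply (rderiv_ext _ (fun r => 2 * half_energy H B u u' r)); [|exact I|].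
  - intros s _. rewrite energy_eq. unfold half_energy. field.
  - apply (rderiv_eq _ _ (2 * half_energy_deriv H delta g u' t)).
    + unfold half_energy_deriv, energy_deriv. ring.
    + assert (Hpos : forall r, r > 0 -> half_line r) by (intros r Hr; red; lra).
      apply rderiv_scal, (half_energy_has_deriv H DB B delta g u u'); auto.
      * intros r Hr. apply eps_near_interior; [exact Hr|exact (u_deriv r (Hpos r Hr))].
      * intros r Hr. apply eps_near_interior; [exact Hr|exact (u'_cont r (Hpos r Hr))].
      * intros r Hr. apply eps_near_interior; [exact Hr|exact (Bu_cont r (Hpos r Hr))].
      * intros r Hr. apply eps_near_interior; [exact Hr|exact (g_cont r (Hpos r Hr))].
      * intros v Hv r Hr. apply eps_near_interior; [exact Hr|].
        exact (u'_weak_deriv v Hv r (Hpos r Hr)).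
Qed.

Lemma energy_rderiv t : half_line t -> rderiv_at half_line E (energy_deriv t) t.
Proof.
  intros Ht. destruct (Req_dec t 0) as [->|Ht0].
  - apply rderiv_at_half_line_0; auto using energy_cont, energy_deriv_cont, energy_rderiv_pos.
  - apply (eps_near_restrict whole_line); [intros; exact I|].
    apply energy_rderiv_pos. red in Ht. lra.
Qed.

Lemma cross_term_rderiv t : half_line t ->
  rderiv_at half_line (fun r => inner H (u' r) (Q (u r))) (cross_term_deriv t) t.
Proof.
  intros Ht. destruct (B_Q (u t) (u_dom t Ht)) as [DQ BQ].
  pose proof (rderiv_inner_weak H half_line u' (fun r => Q (u r)) _ _ t
    (u'_weak_deriv (Q (u t)) DQ t Ht) (u'_cont t Ht)
    (hderiv_orth_proj H K Q Q_proj _ _ _ _ (u_deriv t Ht))) as D.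
  rewrite BQ in D. exact D.
Qed.

Lemma cross_term_deriv_cont t : half_line t -> rcont_at half_line cross_term_deriv t.
Proof.
  intros Ht. pose proof (u'_cont t Ht) as Cu'. pose proof (g_cont t Ht) as Cg.
  pose proof (Bu_cont t Ht) as CBu.
  pose proof (hcont_orth_proj H K Q Q_proj _ _ _ (hderiv_cont _ _ _ _ _ (u_deriv t Ht))) as CQu.
  pose proof (hcont_orth_proj H K Q Q_proj _ _ _ Cu') as CQu'.
  unfold cross_term_deriv.
  apply rcont_plus; [|apply hcont_inner; auto].
  apply rcont_minus; [|apply hcont_inner; auto].
  apply rcont_minus; [apply hcont_inner; auto|].
  apply rcont_mult; [apply rcont_const|apply hcont_inner; auto].
Qed.

Lemma energy_hat_C1 : C1_on half_line Eh energy_hat_deriv.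
Proof.
  split; intros t Ht.
  - apply rderiv_plus; [apply energy_rderiv, Ht|]. apply rderiv_scal, cross_term_rderiv, Ht.
  - apply rcont_plus; [apply energy_deriv_cont, Ht|].
    apply rcont_mult; [apply rcont_const|apply cross_term_deriv_cont, Ht].
Qed.

Lemma poincare_sqr x : DB x ->
  nu * (hnorm H (Q x) * hnorm H (Q x)) <= hnorm H (B x) * hnorm H (B x).
Proof.
  intros Hx. pose proof (poincare x Hx) as P.
  apply Rmult_le_compat_l with (r := nu) in P; [|lra].
  replace (nu * (/ nu * hnorm H (B x) ^ 2)) with (hnorm H (B x) ^ 2) in P by (field; lra).
  simpl in P. lra.
Qed.

Lemma energy_hat_equiv t : half_line t -> 1/2 * E t <= Eh t /\ Eh t <= 2 * E t.
Proof.
  intros Ht. unfold energy_hat, energy. simpl. rewrite !Rmult_1_r.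
  destruct (mu_const_spec nu delta nu_pos delta_pos) as (Hm0 & Hm1 & Hm2 & Hm3 & Hm4).
  apply perturbed_energy_equiv with (nu := nu) (delta := delta) (q := hnorm H (Q (u t)));
    auto using hnorm_ge0, cauchy_schwarz, poincare_sqr.
Qed.

Lemma energy_hat_deriv_le t : half_line t ->
  energy_hat_deriv t <= - (mu / 2) * Eh t + 2 / delta * hnorm H (g t) ^ 2.
Proof.
  intros Ht. destruct (mu_const_spec nu delta nu_pos delta_pos) as (Hm0 & Hm1 & Hm2 & Hm3 & Hm4).
  pose proof (orth_proj_inner_self H K Q Q_proj (u' t)) as Q1.
  pose proof (orth_proj_sqr_le H K Q Q_proj (u' t)) as Q2.
  pose proof (inner_ge0 H (Q (u' t))).
  unfold energy_hat_deriv, energy_deriv, cross_term_deriv, energy_hat, energy.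
  rewrite <- !hnorm_mul_self in *. simpl. rewrite !Rmult_1_r.
  apply perturbed_energy_deriv_bound with (nu := nu) (q := hnorm H (Q (u t)));
    auto using hnorm_ge0, cauchy_schwarz, poincare_sqr. lra.
Qed.

Lemma energy_hat_estimates :
  (forall t, 0 <= t -> 1/2 * E t <= Eh t /\ Eh t <= 2 * E t) /\
  C1_on half_line Eh energy_hat_deriv /\
  (forall t, 0 <= t -> energy_hat_deriv t <= - (mu / 2) * Eh t + 2 / delta * hnorm H (g t) ^ 2).
Proof. split; [|split]; [exact energy_hat_equiv|exact energy_hat_C1|exact energy_hat_deriv_le]. Qed.

End DampedWave.

Theorem lemma4p2
  (H : Hilbert)
  (DA : H -> Prop) (A : H -> H)
  (DB : H -> Prop) (B : H -> H)
  (Q : H -> H) (delta nu : R)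
  (g u u' : R -> H) :
  sa_nonneg_op H DA A ->
  is_sqrt_op H DA A DB B ->
  is_orth_proj H (orth H (kerA H DA A)) Q ->
  0 < delta ->
  0 < nu ->
  (forall x, DB x -> hnorm H (Q x) ^ 2 <= / nu * hnorm H (B x) ^ 2) ->
  hcont_on H half_line g ->
  weak_solution H DB B delta g u u' ->
  let mu := mu_const nu delta in
  let E := energy H B u u' in
  let Eh := energy_hat H B Q mu u u' in
  (* (1) *)
  ((forall t, 0 <= t -> 1/2 * E t <= Eh t /\ Eh t <= 2 * E t) /\
   exists Eh' : R -> R,
     C1_on half_line Eh Eh' /\
     (forall t, 0 <= t ->
        Eh' t <= - (mu / 2) * Eh t + 2 / delta * hnorm H (g t) ^ 2)) /\
  (* (2) *)
  (forall (a : R) (b : option R) (d : R),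
     0 <= a -> 0 <= d ->
     (forall t, in_interval a b t -> u t <> h0 H) ->
     (forall t, in_interval a b t ->
        1/2 * Gd H B d u u' t <= Gd_hat H B Q mu d u u' t /\
        Gd_hat H B Q mu d u u' t <= 2 * Gd H B d u u' t) /\
     exists Gh' : R -> R,
       C1_on (in_interval a b) (Gd_hat H B Q mu d u u') Gh' /\
       (forall t, in_interval a b t ->
          Gh' t <= - (mu / 2) * Gd_hat H B Q mu d u u' t
                   + 2 / delta * hnorm H (g t) ^ 2 / Rpower (hnorm H (u t)) (2 + d)
                   + (2 + d) * Rpower (hnorm H (u t)) (d / 2)
                       * sqrt (Gd H B d u u' t) * Gd_hat H B Q mu d u u' t)).
Proof.
  intros Hsa Hsq HQ Hdelta Hnu Hpoincare Hg Hsol mu E Eh.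
  destruct Hsol as (Hdom & _ & HBu & Hu & Hu' & Hweak).
  destruct (energy_hat_estimates H _ DB B Q delta nu g u u' Hdelta Hnu HQ
              (sqrt_op_orth_proj H DA A DB B Q Hsa Hsq HQ) Hpoincare Hg Hdom HBu Hu Hu' Hweak)
    as (Hequiv & [HEh HEh'] & Hineq).
  split.
  { split; [exact Hequiv|]. exists (energy_hat_deriv H B Q delta nu g u u').
    split; [split|]; [exact HEh|exact HEh'|exact Hineq]. }
  intros a b d Ha Hd Hne.
  assert (Sub : forall t, in_interval a b t -> half_line t) by (intros t [Ht _]; red; lra).
  apply (normalized_energy_estimates H (in_interval a b) u u' E Eh
           (energy_hat_deriv H B Q delta nu g u u') (fun t => 2 / delta * hnorm H (g t) ^ 2)
           mu d); auto.
  - intros t St. exact (eps_near_restrict _ _ _ _ Sub (Hu t (Sub t St))).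
  - intros t St. exact (eps_near_restrict _ _ _ _ Sub (Hu' t (Sub t St))).
  - intros t St. exact (eps_near_restrict _ _ _ _ Sub (HEh t (Sub t St))).
  - intros t St. exact (eps_near_restrict _ _ _ _ Sub (HEh' t (Sub t St))).
  - intros t _. unfold E, energy. pose proof (pow2_ge_0 (hnorm H (B (u t)))). lra.
  - intros t St. exact (Hequiv t (Sub t St)).
  - intros t St. exact (Hineq t (Sub t St)).
Qed.
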